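(* Let $T$ be a complete theory and $\phi(x,y)$ a formula. The following are equivalent: (1) $\phi(x,y)$ has IP. (2) There exist a model $M$ of $T$, a tuple $b\in M$ and $\sigma\in\mathrm{Aut}(M)$ such that, with $U=\phi(M,b)$, the set $\xi_{\sigma,U}(M)$ is dense in $2^{\mathbb{Z}}$. (3) There exist a model $M$ of $T$ and $\sigma\in\mathrm{Aut}(M)$ such that for every $n\in\mathbb{N}$ there is an instance $U_n=\phi(M,b_n)$, $b_n\in M$, such that every binary sequence of length $n$ appears as a subsequence of some element of $\xi_{\sigma,U_n}(M)$. (4) There exist a model $M$ of $T$, a tuple $b\in M$ and $\sigma\in\mathrm{Aut}(M)$ such that, with $U=\phi(M,b)$, $\xi_{\sigma,U}(M)$ contains a universal sequence. (5) There exist a model $M$ of $T$, a tuple $b\in M$ and $\sigma\in\mathrm{Aut}(M)$ such that, with $U=\phi(M,b)$, $\xi_{\sigma,U}(M)=2^{\mathbb{Z}}$. (6) There exists a model $M$ of $T$ such that $\rho_\phi(M)$ is dense in $2^{\mathbb{Z}}$.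
   Context: $\phi(x,y)$ has IP if in some model, for every $n$, there are $a_1,\dots,a_n$ such that for every $J\subseteq\{1,\dots,n\}$ there is $b_J$ with $\phi(a_i,b_J)\iff i\in J$. Subsets of $\mathbb{Z}$ are identified with binary $\mathbb{Z}$-sequences; $2^{\mathbb{Z}}$ has the product topology. For $\sigma\in\mathrm{Aut}(M)$ and $U\subseteq M$ (in the sort of $x$), $\xi_{\sigma,U}(a)=\{n\in\mathbb{Z}:\sigma^n(a)\in U\}$ and $\xi_{\sigma,U}(M)$ is its image. A finite binary sequence ''appears as a subsequence'' of a $\mathbb{Z}$-sequence if it occurs as a block of consecutive entries; a binary $\mathbb{Z}$-sequence is universal if every finite binary sequence appears in it in this sense. $\rho_\phi(M)=\bigcup_{b}\bigcup_{\sigma\in\mathrm{Aut}(M)}\xi_{\sigma,\phi(M,b)}(M)$, the union over all parameter tuples $b$ in $M$. *)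

From Stdlib Require Import ZArith List Arith.
From Stdlib Require Vectors.Fin.
Import ListNotations.
Set Implicit Arguments.

Record signature : Type := Signature {
  funsym : Type; fun_ar : funsym -> nat;
  relsym : Type; rel_ar : relsym -> nat }.

Section Syntax.
Variable L : signature.

Inductive term : Type :=
| tvar : nat -> term
| tapp : forall f : funsym L, (Fin.t (@fun_ar L f) -> term) -> term.

(* variables are named by natural numbers; f_all n φ is "forall x_n, φ" *)
Inductive formula : Type :=
| f_false : formula
| f_eq : term -> term -> formula
| f_rel : forall r : relsym L, (Fin.t (@rel_ar L r) -> term) -> formula
| f_imp : formula -> formula -> formula
| f_all : nat -> formula -> formula.

Definition f_not (φ : formula) : formula := f_imp φ f_false.

Fixpoint t_occurs (i : nat) (t : term) : Prop :=
  match t with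
  | tvar j => i = j
  | tapp f ts => exists j, t_occurs i (ts j)
  end.

Fixpoint occurs_free (i : nat) (φ : formula) : Prop :=
  match φ with
  | f_false => False
  | f_eq t1 t2 => t_occurs i t1 \/ t_occurs i t2
  | f_rel r ts => exists j, t_occurs i (ts j)
  | f_imp φ1 φ2 => occurs_free i φ1 \/ occurs_free i φ2
  | f_all n φ1 => i <> n /\ occurs_free i φ1
  end.

Definition sentence (φ : formula) : Prop := forall i, ~ occurs_free i φ.
End Syntax.

Record structure (L : signature) : Type := Structure {
  carrier :> Type;
  witness : carrier;  (* structures are nonempty *)
  fun_int : forall f : funsym L, (Fin.t (@fun_ar L f) -> carrier) -> carrier;
  rel_int : forall r : relsym L, (Fin.t (@rel_ar L r) -> carrier) -> Prop }.

Section Semantics.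
Variables (L : signature) (M : structure L).

Fixpoint t_eval (v : nat -> M) (t : term L) : M :=
  match t with
  | tvar _ j => v j
  | tapp f ts => fun_int M f (fun j => t_eval v (ts j))
  end.

Definition upd (v : nat -> M) (n : nat) (a : M) : nat -> M :=
  fun i => if Nat.eqb i n then a else v i.

Fixpoint sat (v : nat -> M) (φ : formula L) : Prop :=
  match φ with
  | f_false _ => False
  | f_eq t1 t2 => t_eval v t1 = t_eval v t2
  | f_rel r ts => rel_int M r (fun j => t_eval v (ts j))
  | f_imp φ1 φ2 => sat v φ1 -> sat v φ2
  | f_all n φ1 => forall a : M, sat (upd v n a) φ1
  end.

Definition satS (φ : formula L) : Prop := sat (fun _ => witness M) φ.

(* valuation x_0..x_{k-1} := a, x_k..x_{k+m-1} := b, others arbitrary *)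
Definition env2 (k m : nat) (a : Fin.t k -> M) (b : Fin.t m -> M) : nat -> M :=
  fun n => match lt_dec n k with
           | left h => a (Fin.of_nat_lt h)
           | right _ => match lt_dec (n - k) m with
                        | left h => b (Fin.of_nat_lt h)
                        | right _ => witness M
                        end
           end.

Definition sat2 (k m : nat) (φ : formula L) (a : Fin.t k -> M) (b : Fin.t m -> M) : Prop :=
  sat (env2 a b) φ.
End Semantics.

Definition theory (L : signature) := formula L -> Prop.

Definition is_model (L : signature) (T : theory L) (M : structure L) : Prop :=
  forall ψ, T ψ -> satS M ψ.

Definition complete_theory (L : signature) (T : theory L) : Prop :=
  (forall ψ, T ψ -> sentence ψ) /\
  (exists M : structure L, is_model T M) /\
  (forall ψ, sentence ψ ->
     (forall M : structure L, is_model T M -> satS M ψ) \/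
     (forall M : structure L, is_model T M -> satS M (f_not ψ))).

(* φ(x,y) is a formula in the variables x = x_0..x_{k-1}, y = x_k..x_{k+m-1} *)
Definition formula_in (L : signature) (k m : nat) (φ : formula L) : Prop :=
  forall i, occurs_free i φ -> i < k + m.

Definition has_IP (L : signature) (T : theory L) (k m : nat) (φ : formula L) : Prop :=
  exists M : structure L, is_model T M /\
    forall n : nat, exists a : nat -> (Fin.t k -> M),
      forall J : nat -> Prop, exists b : Fin.t m -> M,
        forall i, i < n -> (@sat2 L M k m φ (a i) b <-> J i).

Record automorphism (L : signature) (M : structure L) : Type := Aut {
  aut_fun :> M -> M;
  aut_inv : M -> M;
  aut_inv_l : forall x, aut_inv (aut_fun x) = x;
  aut_inv_r : forall x, aut_fun (aut_inv x) = x;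
  aut_fun_hom : forall f (a : Fin.t (@fun_ar L f) -> M),
      aut_fun (fun_int M f a) = fun_int M f (fun j => aut_fun (a j));
  aut_rel_hom : forall r (a : Fin.t (@rel_ar L r) -> M),
      rel_int M r a <-> rel_int M r (fun j => aut_fun (a j)) }.

Definition aut_pow (L : signature) (M : structure L) (σ : automorphism M)
  (z : Z) (x : M) : M :=
  match z with
  | Z0 => x
  | Zpos p => Pos.iter (aut_fun σ) x p
  | Zneg p => Pos.iter (aut_inv σ) x p
  end.

Definition aut_pow_tuple (L : signature) (M : structure L) (σ : automorphism M)
  (k : nat) (z : Z) (a : Fin.t k -> M) : Fin.t k -> M :=
  fun j => aut_pow σ z (a j).

(** * Binary Z-sequences = subsets of Z *)
Definition zseq := Z -> Prop.

Definition xi (L : signature) (M : structure L) (σ : automorphism M) (k : nat)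
  (U : (Fin.t k -> M) -> Prop) (a : Fin.t k -> M) : zseq :=
  fun n => U (aut_pow_tuple σ n a).

(* membership of s in ξ_{σ,U}(M) (sets of integers compared extensionally) *)
Definition in_xi_image (L : signature) (M : structure L) (σ : automorphism M)
  (k : nat) (U : (Fin.t k -> M) -> Prop) (s : zseq) : Prop :=
  exists a : Fin.t k -> M, forall n, xi σ U a n <-> s n.

Definition instance (L : signature) (M : structure L) (k m : nat)
  (φ : formula L) (b : Fin.t m -> M) : (Fin.t k -> M) -> Prop :=
  fun a => @sat2 L M k m φ a b.

(* density in 2^ℤ with the product topology: S meets every basic open
   cylinder {s | s z <-> v z for all z in F}, F finite *)
Definition dense (S : zseq -> Prop) : Prop :=
  forall (F : list Z) (v : zseq), exists s, S s /\ forall z, In z F -> (s z <-> v z).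

Definition appears_in (w : list bool) (s : zseq) : Prop :=
  exists z0 : Z, forall i, i < length w ->
    (s (z0 + Z.of_nat i)%Z <-> nth i w false = true).

Definition universal (s : zseq) : Prop := forall w : list bool, appears_in w s.

Definition rho (L : signature) (M : structure L) (k m : nat) (φ : formula L)
  (s : zseq) : Prop :=
  exists (b : Fin.t m -> M) (σ : automorphism M), in_xi_image σ (@instance L M k m φ b) s.

(* The substantial direction is (1) ⇒ (5).  If φ has IP in a model M, an ultrapower of M
   contains parameters c_t (t ∈ ℕ) and d_s (s ⊆ ℕ) with φ(d_s, c_t) iff t ∈ s.  By
   Ramsey's theorem, a further ultrapower contains a ℤ-indexed sequence (b_z), still dually
   shattered by φ, over which the shift b_z ↦ b_(z-1) is finitely elementary.  Realizing the
   shift in an ultrapower, iterating these ultrapowers and taking a direct limit turns it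
   into an automorphism σ of an elementary extension, and then every s ⊆ ℤ is
   ξ_(σ,φ(M,b_0))(d_s).  The implications (5) ⇒ (4) ⇒ (3) ⇒ (6) and (5) ⇒ (2) ⇒ (6) are
   direct, and (6) ⇒ (1) reads a shattered set off an orbit of σ, using an element of
   ρ_φ(M) that agrees with a universal sequence on a long enough window. *)

From Stdlib Require Import ZArith List Arith Lia.
From Stdlib Require Vectors.Fin.
From Stdlib Require Import Classical ClassicalEpsilon.
From Stdlib Require Import FunctionalExtensionality PropExtensionality ProofIrrelevance.
From mathcomp Require filter.
#[local] Arguments t_eval {L M} v t.
#[local] Arguments sat {L M} v φ.
#[local] Arguments upd {L M} v n a _.
#[local] Arguments env2 {L M k m} a b _.
#[local] Arguments sat2 {L M k m} φ a b.
#[local] Arguments fun_ar {s} _.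
#[local] Arguments rel_ar {s} _.

(** * Free variables and elementary maps *)

Section Elementary.
Context {L : signature}.

Fixpoint fin_max (n : nat) : (Fin.t n -> nat) -> nat :=
  match n with
  | 0 => fun _ => 0
  | S n' => fun f => Nat.max (f Fin.F1) (@fin_max n' (fun j => f (Fin.FS j)))
  end.
Arguments fin_max {n} _.

Lemma fin_max_ge n (j : Fin.t n) : forall f, f j <= fin_max f.
Proof.
  induction j; intros f; simpl; [lia|].
  specialize (IHj (fun j => f (Fin.FS j))); simpl in IHj; lia.
Qed.

Fixpoint max_below (b : nat) (f : nat -> nat) : nat :=
  match b with 0 => 0 | S b' => Nat.max (f b') (max_below b' f) end.

Lemma max_below_ge b f x : x < b -> f x <= max_below b f.
Proof.
  induction b; simpl; intros H; [lia|].
  destruct (Nat.eq_dec x b); [subst; lia|]. specialize (IHb ltac:(lia)); lia.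
Qed.

Fixpoint term_bound (t : term L) : nat :=
  match t with
  | tvar j => S j
  | tapp f ts => fin_max (fun j => term_bound (ts j))
  end.

Fixpoint formula_bound (φ : formula L) : nat :=
  match φ with
  | f_false => 0
  | f_eq t1 t2 => Nat.max (term_bound t1) (term_bound t2)
  | f_rel r ts => fin_max (fun j => term_bound (ts j))
  | f_imp a b => Nat.max (formula_bound a) (formula_bound b)
  | f_all n a => formula_bound a
  end.

Lemma term_bound_arg f (ts : Fin.t (fun_ar f) -> term L) j :
  term_bound (ts j) <= term_bound (tapp f ts).
Proof. apply (fin_max_ge _ j (fun j => term_bound (ts j))). Qed.

Lemma t_occurs_lt_bound t x : t_occurs x t -> x < term_bound t.
Proof.
  induction t as [j|f ts IH]; simpl; [lia|].
  intros [j Hj]. specialize (IH j Hj). pose proof (term_bound_arg f ts j). simpl in *; lia.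
Qed.

Lemma occurs_free_lt_bound φ x : occurs_free x φ -> x < formula_bound φ.
Proof.
  induction φ; simpl; try tauto.
  - intros [H|H]; apply t_occurs_lt_bound in H; lia.
  - intros [j Hj]. apply t_occurs_lt_bound in Hj.
    pose proof (fin_max_ge _ j (fun j => term_bound (t j))). simpl in *; lia.
  - intros [H|H]; [apply IHφ1 in H|apply IHφ2 in H]; lia.
Qed.

Lemma t_eval_coinc (M : structure L) t (v v' : nat -> M) :
  (forall x, t_occurs x t -> v x = v' x) -> t_eval v t = t_eval v' t.
Proof.
  induction t as [j|f ts IH]; simpl; intros H; [auto|].
  f_equal. apply functional_extensionality. intros j. apply IH. intros x Hx. apply H. exists j; auto.
Qed.

Lemma sat_coinc (M : structure L) φ : forall (v v' : nat -> M),
  (forall x, occurs_free x φ -> v x = v' x) -> (sat v φ <-> sat v' φ).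
Proof.
  induction φ; simpl; intros v v' H.
  - tauto.
  - rewrite (t_eval_coinc M t v v'), (t_eval_coinc M t0 v v'); [tauto| |]; intros; apply H; auto.
  - replace (fun j => t_eval v (t j)) with (fun j => t_eval v' (t j)); [tauto|].
    apply functional_extensionality; intros j; symmetry; apply t_eval_coinc; intros; apply H; eauto.
  - rewrite (IHφ1 v v'), (IHφ2 v v'); [tauto| |]; intros; apply H; auto.
  - split; intros Ha a; [rewrite <- (IHφ (upd v n a))|rewrite (IHφ (upd v n a) (upd v' n a))]; auto;
      intros x Hx; unfold upd; destruct (Nat.eqb_spec x n); auto; apply H; auto.
Qed.

Lemma sat_ext (M : structure L) φ (v v' : nat -> M) :
  (forall x, v x = v' x) -> (sat v φ <-> sat v' φ).
Proof. intros; apply sat_coinc; auto. Qed.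

Lemma sat_bound_ext (M : structure L) φ (v v' : nat -> M) :
  (forall x, x < formula_bound φ -> v x = v' x) -> (sat v φ <-> sat v' φ).
Proof. intros H; apply sat_coinc; intros x Hx; apply H, occurs_free_lt_bound; auto. Qed.

Lemma sentence_sat (M : structure L) φ (v v' : nat -> M) : sentence φ -> (sat v φ <-> sat v' φ).
Proof. intros Hs; apply sat_coinc; intros x Hx; exfalso; exact (Hs x Hx). Qed.

Definition elementary (A B : structure L) (f : A -> B) : Prop :=
  forall φ (v : nat -> A), sat v φ <-> sat (fun x => f (v x)) φ.
Arguments elementary {A B} f.

Lemma elementary_comp (A B C : structure L) (f : A -> B) (g : B -> C) :
  elementary f -> elementary g -> elementary (fun x => g (f x)).
Proof. intros Hf Hg φ v. rewrite (Hf φ v). apply (Hg φ (fun x => f (v x))). Qed.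

Lemma elementary_iter (A : structure L) (f : A -> A) n : elementary f -> elementary (Nat.iter n f).
Proof.
  intros Hf. induction n; simpl; intros φ v.
  - apply sat_ext; reflexivity.
  - rewrite (IHn φ v). apply (Hf φ (fun x => Nat.iter n f (v x))).
Qed.

Lemma elementary_inj (A B : structure L) (f : A -> B) : elementary f -> forall x y, f x = f y -> x = y.
Proof.
  intros Hf x y Hxy.
  pose (v := fun n => match n with 0 => x | _ => y end).
  apply (Hf (f_eq (tvar L 0) (tvar L 1)) v). simpl. exact Hxy.
Qed.

Lemma elementary_is_model (T : theory L) (A B : structure L) (f : A -> B) :
  (forall ψ, T ψ -> sentence ψ) -> elementary f -> is_model T A -> is_model T B.
Proof.
  intros Hs Hf HA ψ Hψ. unfold satS.
  apply (sentence_sat B ψ (fun _ => f (witness A))); auto.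
  apply Hf, HA; auto.
Qed.

Lemma elementary_sat2 (A B : structure L) (f : A -> B) k m (φ : formula L)
  (a : Fin.t k -> A) (b : Fin.t m -> A) :
  elementary f -> formula_in k m φ -> (sat2 φ (fun j => f (a j)) (fun j => f (b j)) <-> sat2 φ a b).
Proof.
  intros Hf Hin. unfold sat2. rewrite (Hf φ (env2 a b)). apply sat_coinc. intros x Hx.
  apply Hin in Hx. unfold env2. destruct (lt_dec x k); auto. destruct (lt_dec (x - k) m); auto. lia.
Qed.

Definition fin_default {A : Type} {n : nat} (a : Fin.t n -> A) (d : A) (x : nat) : A :=
  match lt_dec x n with left h => a (Fin.of_nat_lt h) | right _ => d end.

Lemma fin_default_to_nat (A : Type) n (a : Fin.t n -> A) d j :
  fin_default a d (proj1_sig (Fin.to_nat j)) = a j.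
Proof.
  unfold fin_default. destruct (lt_dec _ n) as [h|h].
  - rewrite (Fin.of_nat_ext h (proj2_sig (Fin.to_nat j))). f_equal; apply Fin.of_nat_to_nat_inv.
  - exfalso; apply h; apply proj2_sig.
Qed.

Lemma elementary_fun_int (A B : structure L) (f : A -> B) : elementary f ->
  forall F (a : Fin.t (fun_ar F) -> A), f (fun_int A F a) = fun_int B F (fun j => f (a j)).
Proof.
  intros Hf F a.
  pose (n := fun_ar F).
  pose (v := fun x => if Nat.eqb x n then fun_int A F a else fin_default a (witness A) x).
  pose (ψ := f_eq (tapp F (fun j => tvar L (proj1_sig (Fin.to_nat j)))) (tvar L n)).
  assert (Hv : forall j, v (proj1_sig (Fin.to_nat j)) = a j).
  { intros j. unfold v. pose proof (proj2_sig (Fin.to_nat j)) as Hj. simpl in Hj.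
    destruct (Nat.eqb_spec (proj1_sig (Fin.to_nat j)) n); [unfold n in *; lia|].
    apply fin_default_to_nat. }
  assert (Hvn : v n = fun_int A F a) by (unfold v; rewrite Nat.eqb_refl; auto).
  assert (H : sat v ψ).
  { simpl. rewrite Hvn. f_equal. apply functional_extensionality; intros j. apply Hv. }
  apply Hf in H. simpl in H. rewrite Hvn in H.
  rewrite <- H. f_equal.
  apply functional_extensionality; intros j. rewrite Hv; auto.
Qed.

Lemma elementary_rel_int (A B : structure L) (f : A -> B) : elementary f ->
  forall R (a : Fin.t (rel_ar R) -> A), rel_int A R a <-> rel_int B R (fun j => f (a j)).
Proof.
  intros Hf R a.
  pose (v := fin_default a (witness A)).
  specialize (Hf (f_rel R (fun j => tvar L (proj1_sig (Fin.to_nat j)))) v). simpl in Hf.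
  replace (fun j => v (proj1_sig (Fin.to_nat j))) with a in Hf
    by (apply functional_extensionality; intros j; unfold v; rewrite fin_default_to_nat; auto).
  replace (fun j => f (v (proj1_sig (Fin.to_nat j)))) with (fun j => f (a j)) in Hf
    by (apply functional_extensionality; intros j; unfold v; rewrite fin_default_to_nat; auto).
  exact Hf.
Qed.

Lemma aut_t_eval (M : structure L) (σ : automorphism M) t (v : nat -> M) :
  σ (t_eval v t) = t_eval (fun x => σ (v x)) t.
Proof.
  induction t as [j|F ts IH]; simpl; auto.
  rewrite aut_fun_hom. f_equal. apply functional_extensionality; auto.
Qed.

Lemma aut_elementary (M : structure L) (σ : automorphism M) : elementary (aut_fun σ).
Proof.
  intros φ; induction φ; intros v; simpl.
  - tauto.
  - rewrite <- !aut_t_eval. split; [congruence|].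
    intros H. rewrite <- (aut_inv_l σ (t_eval v t)), H. apply aut_inv_l.
  - rewrite (aut_rel_hom σ).
    replace (fun j => σ (t_eval v (t j))) with (fun j => t_eval (fun x => σ (v x)) (t j)); [tauto|].
    apply functional_extensionality; intros; rewrite aut_t_eval; auto.
  - rewrite IHφ1, IHφ2; tauto.
  - split; intros H a.
    + specialize (H (aut_inv σ a)). rewrite IHφ in H. revert H; apply sat_ext.
      intros x; unfold upd; destruct (x =? n); auto. symmetry; apply aut_inv_r.
    + rewrite IHφ. specialize (H (σ a)). revert H; apply sat_ext.
      intros x; unfold upd; destruct (x =? n); auto.
Qed.

Definition aut_of_elementary {M : structure L} (f g : M -> M) (Hl : forall x, g (f x) = x)
  (Hr : forall x, f (g x) = x) (He : elementary f) : automorphism M :=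
  Aut M f g Hl Hr (elementary_fun_int M M f He) (elementary_rel_int M M f He).

End Elementary.
Arguments elementary {L A B} f.
Arguments fin_max {n} _.
Arguments aut_of_elementary {L M} f g Hl Hr He.

Section AutPow.
Local Open Scope Z_scope.
Context {L : signature} {M : structure L} (σ : automorphism M).

Lemma pos_iter_nat (f : M -> M) x p : Pos.iter f x p = Nat.iter (Pos.to_nat p) f x.
Proof.
  induction p using Pos.peano_ind; [reflexivity|].
  rewrite Pos.iter_succ, Pos2Nat.inj_succ, IHp. reflexivity.
Qed.

Lemma aut_pow_nat n x : aut_pow σ (Z.of_nat n) x = Nat.iter n (aut_fun σ) x.
Proof. destruct n; [reflexivity|]. simpl. rewrite pos_iter_nat, SuccNat2Pos.id_succ. reflexivity. Qed.

Lemma aut_pow_neg_nat n x : aut_pow σ (- Z.of_nat n) x = Nat.iter n (aut_inv σ) x.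
Proof. destruct n; [reflexivity|]. simpl. rewrite pos_iter_nat, SuccNat2Pos.id_succ. reflexivity. Qed.

Lemma Z_nat_or_neg_nat (z : Z) : exists n, z = Z.of_nat n \/ z = - Z.of_nat n.
Proof. exists (Z.to_nat (Z.abs z)). lia. Qed.

Lemma aut_pow_succ z x : aut_pow σ (z + 1) x = σ (aut_pow σ z x).
Proof.
  destruct (Z_nat_or_neg_nat z) as [[|n] [->| ->]]; try reflexivity.
  - replace (Z.of_nat (S n) + 1) with (Z.of_nat (S (S n))) by lia. rewrite !aut_pow_nat. reflexivity.
  - replace (- Z.of_nat (S n) + 1) with (- Z.of_nat n) by lia. rewrite !aut_pow_neg_nat.
    simpl. rewrite aut_inv_r. reflexivity.
Qed.

Lemma aut_pow_pred z x : aut_pow σ (z - 1) x = aut_inv σ (aut_pow σ z x).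
Proof.
  destruct (Z_nat_or_neg_nat z) as [[|n] [->| ->]]; try reflexivity.
  - replace (Z.of_nat (S n) - 1) with (Z.of_nat n) by lia. rewrite !aut_pow_nat.
    simpl. rewrite aut_inv_l. reflexivity.
  - replace (- Z.of_nat (S n) - 1) with (- Z.of_nat (S (S n))) by lia. rewrite !aut_pow_neg_nat. reflexivity.
Qed.

Lemma aut_pow_add a b x : aut_pow σ (a + b) x = aut_pow σ a (aut_pow σ b x).
Proof.
  induction a using Z.peano_ind.
  - reflexivity.
  - replace (Z.succ a + b) with ((a + b) + 1) by lia. unfold Z.succ.
    rewrite !aut_pow_succ, IHa. reflexivity.
  - replace (Z.pred a + b) with ((a + b) - 1) by lia. unfold Z.pred.
    replace (a + -1) with (a - 1) by lia.
    rewrite !aut_pow_pred, IHa. reflexivity.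
Qed.

Lemma aut_pow_oppK z x : aut_pow σ (- z) (aut_pow σ z x) = x.
Proof. rewrite <- aut_pow_add. replace (- z + z) with 0 by lia. reflexivity. Qed.

Lemma aut_inv_elementary : elementary (aut_inv σ).
Proof.
  intros φ v. rewrite (aut_elementary M σ φ (fun x => aut_inv σ (v x))).
  apply sat_ext. intros x. rewrite aut_inv_r. reflexivity.
Qed.

Lemma aut_pow_elementary z : elementary (aut_pow σ z).
Proof.
  destruct (Z_nat_or_neg_nat z) as [n [->| ->]]; intros φ v.
  - rewrite (elementary_iter _ _ n (aut_elementary M σ) φ v).
    apply sat_ext; intros; rewrite aut_pow_nat; auto.
  - rewrite (elementary_iter _ _ n aut_inv_elementary φ v).
    apply sat_ext; intros; rewrite aut_pow_neg_nat; auto.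
Qed.

Lemma aut_pow_shift_orbit {X : Type} (β : Z -> X -> M) :
  (forall z j, σ (β z j) = β (z - 1) j) -> forall w z j, aut_pow σ z (β w j) = β (w - z) j.
Proof.
  intros Hσβ w z j. induction z using Z.peano_ind.
  - rewrite Z.sub_0_r. reflexivity.
  - unfold Z.succ. rewrite aut_pow_succ, IHz, Hσβ. f_equal. lia.
  - unfold Z.pred. replace (z + -1) with (z - 1) by lia. rewrite aut_pow_pred, IHz.
    replace (β (w - z) j) with (aut_fun σ (β (w - (z - 1)) j)) by (rewrite Hσβ; f_equal; lia).
    apply aut_inv_l.
Qed.

End AutPow.

(** * Ultrafilters and ultrapowers *)

Record ultrafilter {I : Type} (U : (I -> Prop) -> Prop) : Prop := {
  uf_setT : U (fun _ => True);
  uf_sub : forall A B : I -> Prop, (forall i, A i -> B i) -> U A -> U B;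
  uf_meet : forall A B, U A -> U B -> U (fun i => A i /\ B i);
  uf_not_empty : ~ U (fun _ => False);
  uf_or_compl : forall A, U A \/ U (fun i => ~ A i) }.

Lemma ultrafilter_of_fip {I : Type} (B : (I -> Prop) -> Prop) :
  (forall l, (forall X, In X l -> B X) -> exists i, forall X, In X l -> X i) ->
  exists U, ultrafilter U /\ forall X, B X -> U X.
Proof.
  intros HB.
  pose (F := fun X : I -> Prop =>
    exists l, (forall Y, In Y l -> B Y) /\ forall i, (forall Y, In Y l -> Y i) -> X i).
  assert (FF : filter.Filter F).
  { constructor.
    - exists nil. split; [intros Y []|]. intros; constructor.
    - intros P Q [l1 [H1 H1']] [l2 [H2 H2']]. exists (l1 ++ l2). split.
      + intros Y HY; apply in_app_or in HY; destruct HY; auto.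
      + intros i Hi. split; [apply H1'|apply H2']; intros Y HY; apply Hi, in_or_app; auto.
    - intros P Q HPQ [l [H1 H2]]. exists l; split; auto. }
  assert (PF : filter.ProperFilter F).
  { constructor; [|exact FF]. intros [l [H1 H2]]. destruct (HB l H1) as [i Hi]. exact (H2 i Hi). }
  destruct (filter.ultraFilterLemma PF) as [G [HG HFG]].
  pose proof (@filter.ultra_proper _ G HG) as PG.
  pose proof (@filter.filter_filter _ G PG) as FG.
  exists G. split.
  - split.
    + exact (@filter.filterT _ G FG).
    + intros A B0 HAB HA. exact (@filter.filterS _ G FG A B0 HAB HA).
    + intros A B0 HA HB0. exact (@filter.filterI _ G FG A B0 HA HB0).
    + exact (@filter.filter_not_empty _ G PG).
    + intros A. exact (filter.in_ultra_setVsetC A HG).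
  - intros X HX. apply HFG. exists (X :: nil). split.
    + intros Y [<-|[]]; auto.
    + intros i Hi; apply Hi; left; auto.
Qed.

Lemma ultrafilter_on_lists (X : Type) :
  exists V : (list X -> Prop) -> Prop, ultrafilter V /\ forall c, V (fun Φ => In c Φ).
Proof.
  destruct (ultrafilter_of_fip (fun Y : list X -> Prop => exists c, Y = fun Φ => In c Φ))
    as [V [HV HVX]].
  - intros l Hl. induction l as [|Y l IH].
    + exists nil; intros Y [].
    + destruct IH as [Φ HΦ]; [intros; apply Hl; right; auto|].
      destruct (Hl Y (or_introl eq_refl)) as [c ->].
      exists (c :: Φ). intros Y' [<-|HY]; [left; auto|].
      destruct (Hl Y' (or_intror HY)) as [c' ->]. right. exact (HΦ _ HY).
  - exists V. split; auto. intros c; apply HVX; eauto.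
Qed.

Section UltrafilterFacts.
Context {I : Type} {U : (I -> Prop) -> Prop} (HU : ultrafilter U).

Lemma uf_all (A : I -> Prop) : (forall i, A i) -> U A.
Proof. intros H. apply (uf_sub _ HU (fun _ => True)); [auto|apply uf_setT, HU]. Qed.

Lemma uf_const (P : Prop) : U (fun _ => P) <-> P.
Proof.
  split.
  - intros H. apply NNPP; intros HP. apply (uf_not_empty _ HU). apply (uf_sub _ HU (fun _ => P)); auto.
  - intros HP. apply uf_all; auto.
Qed.

Lemma uf_impl (A B : I -> Prop) : U (fun i => A i -> B i) <-> (U A -> U B).
Proof.
  split.
  - intros H HA. apply (uf_sub _ HU (fun i => (A i -> B i) /\ A i)); [intros i [h1 h2]; auto|].
    apply uf_meet; auto.
  - intros H. destruct (uf_or_compl _ HU A) as [HA|HA].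
    + apply (uf_sub _ HU B); auto.
    + apply (uf_sub _ HU (fun i => ~ A i)); auto. intros i h1 h2; contradiction.
Qed.

Lemma uf_mp (A B : I -> Prop) : U (fun i => A i -> B i) -> U A -> U B.
Proof. intros H. apply uf_impl, H. Qed.

Lemma uf_forall_fin : forall n (P : Fin.t n -> I -> Prop),
  (forall j, U (P j)) -> U (fun i => forall j, P j i).
Proof.
  induction n; intros P H.
  - apply uf_all. intros i j; inversion j.
  - specialize (IHn (fun j => P (Fin.FS j)) (fun j => H (Fin.FS j))).
    apply (uf_sub _ HU (fun i => P Fin.F1 i /\ forall j, P (Fin.FS j) i)); [|apply uf_meet; auto].
    intros i [H1 H2] j. clear IHn. revert P H H1 H2. pattern j. apply Fin.caseS'; auto.
Qed.

Lemma uf_forall_in {X : Type} (l : list X) (P : X -> I -> Prop) :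
  (forall x, In x l -> U (P x)) -> U (fun i => forall x, In x l -> P x i).
Proof.
  induction l as [|a l IH]; intros H.
  - apply uf_all. intros i x [].
  - apply (uf_sub _ HU (fun i => P a i /\ forall x, In x l -> P x i)).
    + intros i [h1 h2] x [<-|hx]; auto.
    + apply uf_meet; auto. apply H; left; auto. apply IH; intros; apply H; right; auto.
Qed.

Lemma uf_forall_lt n (P : nat -> I -> Prop) :
  (forall i, i < n -> U (P i)) -> U (fun Φ => forall i, i < n -> P i Φ).
Proof.
  intros H. eapply (uf_sub _ HU); [|apply (uf_forall_in (seq 0 n) P)].
  - intros Φ HΦ i Hi. apply HΦ. apply in_seq. lia.
  - intros i Hi. apply in_seq in Hi. apply H. lia.
Qed.

Lemma uf_iff_on (X P : I -> Prop) (p : Prop) :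
  U X -> (forall i, X i -> (P i <-> p)) -> (U P <-> p).
Proof.
  intros HX H. rewrite <- (uf_const p).
  split; intros HP; (eapply (uf_sub _ HU); [|exact (uf_meet _ HU _ _ HX HP)]);
    intros i [h1 h2]; apply (H i h1); auto.
Qed.

Lemma uf_iff (P P' : I -> Prop) : U (fun i => P i <-> P' i) -> (U P <-> U P').
Proof.
  intros H. split; apply uf_mp; (eapply (uf_sub _ HU); [|exact H]); intros i h; apply h.
Qed.

End UltrafilterFacts.

Lemma choice_fun {I A : Type} (d : A) (P : I -> A -> Prop) :
  exists g : I -> A, forall i, (exists a, P i a) -> P i (g i).
Proof.
  exists (fun i => match excluded_middle_informative (exists a, P i a) with
           | left h => proj1_sig (constructive_indefinite_description _ h)
           | right _ => d end).
  intros i Hi. destruct (excluded_middle_informative _) as [h|h]; [|contradiction].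
  apply (proj2_sig (constructive_indefinite_description _ h)).
Qed.

(* The universe annotation keeps the carriers small enough to be carriers of structures. *)
Section Quotient.
Context {X : Type@{structure.u0}} (R : X -> X -> Prop) (Rrefl : forall x, R x x)
  (Rsym : forall x y, R x y -> R y x) (Rtrans : forall x y z, R x y -> R y z -> R x z).

Definition canon (x : X) : X :=
  proj1_sig (constructive_indefinite_description (R x) (ex_intro _ x (Rrefl x))).

Lemma canon_R x : R x (canon x).
Proof. unfold canon. apply proj2_sig. Qed.

Lemma canon_eq x y : R x y -> canon x = canon y.
Proof.
  intros H. unfold canon.
  assert (E : R x = R y).
  { apply functional_extensionality; intros z.
    apply propositional_extensionality; split; intros; eauto. }
  assert (G : forall (P P' : X -> Prop) (e : exists z, P z) (e' : exists z, P' z), P = P' ->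
    proj1_sig (constructive_indefinite_description P e) =
    proj1_sig (constructive_indefinite_description P' e')).
  { intros P P' e e' <-. do 2 f_equal. apply proof_irrelevance. }
  apply G, E.
Qed.

Lemma canon_idem x : canon (canon x) = canon x.
Proof. symmetry. apply canon_eq. apply canon_R. Qed.

Definition quot : Type@{structure.u0} := { x : X | canon x = x }.
Definition cls (x : X) : quot := exist _ (canon x) (canon_idem x).
Definition rep (q : quot) : X := proj1_sig q.

Lemma cls_eq x y : cls x = cls y <-> R x y.
Proof.
  split.
  - intros H. apply (f_equal rep) in H. simpl in H.
    apply Rtrans with (canon x); [apply canon_R|]. rewrite H. apply Rsym, canon_R.
  - intros H. apply eq_sig_hprop; [intros; apply proof_irrelevance|]. simpl. apply canon_eq; auto.
Qed.

Lemma rep_cls x : R (rep (cls x)) x.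
Proof. simpl. apply Rsym, canon_R. Qed.

Lemma cls_rep q : cls (rep q) = q.
Proof.
  destruct q as [x Hx]. apply eq_sig_hprop; [intros; apply proof_irrelevance|]. simpl. auto.
Qed.

End Quotient.

Section Ultrapower.
Context {L : signature} (A : structure L) {I : Type@{structure.u0}} (U : (I -> Prop) -> Prop)
  (HU : ultrafilter U).

Definition ueq (f g : I -> A) : Prop := U (fun i => f i = g i).
Lemma ueq_refl f : ueq f f.
Proof. apply (uf_all HU); auto. Qed.
Lemma ueq_sym f g : ueq f g -> ueq g f.
Proof. apply (uf_sub _ HU); auto. Qed.
Lemma ueq_trans f g h : ueq f g -> ueq g h -> ueq f h.
Proof.
  intros H1 H2. apply (uf_sub _ HU (fun i => f i = g i /\ g i = h i)); [intros i [-> ->]; auto|].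
  apply uf_meet; auto.
Qed.

Definition ucls (f : I -> A) := cls ueq ueq_refl ueq_sym ueq_trans f.
Definition urep (q : quot ueq ueq_refl) : I -> A := rep ueq ueq_refl q.

Lemma ucls_eq f g : ucls f = ucls g <-> ueq f g.
Proof. apply cls_eq. Qed.
Lemma urep_ucls f : ueq (urep (ucls f)) f.
Proof. apply rep_cls. Qed.
Lemma ucls_urep q : ucls (urep q) = q.
Proof. apply cls_rep. Qed.

Definition ultrapower : structure L :=
  @Structure L (quot ueq ueq_refl) (ucls (fun _ => witness A))
    (fun F a => ucls (fun i => fun_int A F (fun j => urep (a j) i)))
    (fun Rl a => U (fun i => rel_int A Rl (fun j => urep (a j) i))).

Lemma urep_ucls_fin n (g : Fin.t n -> I -> A) :
  U (fun i => (fun j => urep (ucls (g j)) i) = (fun j => g j i)).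
Proof.
  eapply (uf_sub _ HU); [|apply (uf_forall_fin HU); intros j; apply urep_ucls].
  intros i h. apply functional_extensionality, h.
Qed.

Lemma ultrapower_t_eval (r : nat -> I -> A) t :
  @t_eval L ultrapower (fun x => ucls (r x)) t = ucls (fun i => t_eval (fun x => r x i) t).
Proof.
  induction t as [x|F ts IH]; simpl; [reflexivity|].
  assert (E : (fun j => @t_eval L ultrapower (fun x => ucls (r x)) (ts j)) =
              (fun j => ucls (fun i => t_eval (fun x => r x i) (ts j))))
    by (apply functional_extensionality; intros; apply IH).
  change (ucls (fun i => fun_int A F (fun j =>
            urep ((fun j => @t_eval L ultrapower (fun x => ucls (r x)) (ts j)) j) i))
          = ucls (fun i => fun_int A F (fun j => t_eval (fun x => r x i) (ts j)))).
  rewrite E. apply ucls_eq.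
  eapply (uf_sub _ HU); [|exact (urep_ucls_fin _ (fun j i => t_eval (fun x => r x i) (ts j)))].
  intros i h. rewrite h. reflexivity.
Qed.

Lemma los_all (n : nat) φ (rr : nat -> I -> A) :
  (forall rr', @sat L ultrapower (fun x => ucls (rr' x)) φ <-> U (fun i => sat (fun x => rr' x i) φ)) ->
  ((forall q : ultrapower, sat (@upd L ultrapower (fun x => ucls (rr x)) n q) φ) <->
   U (fun i => forall a, sat (upd (fun x => rr x i) n a) φ)).
Proof.
  intros IH.
  assert (Hupd : forall q : ultrapower, (sat (@upd L ultrapower (fun x => ucls (rr x)) n q) φ <->
                            U (fun i => sat (upd (fun x => rr x i) n (urep q i)) φ))).
  { intros q. rewrite <- IH. apply sat_ext. intros x. unfold upd.
    destruct (Nat.eqb x n); auto. symmetry; apply ucls_urep. }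
  setoid_rewrite Hupd. split.
  - intros H.
    destruct (choice_fun (witness A) (fun i a => ~ sat (upd (fun x => rr x i) n a) φ)) as [g Hg].
    specialize (H (ucls g)).
    eapply (uf_sub _ HU); [|exact (uf_meet _ HU _ _ H (urep_ucls g))].
    intros i [h1 h2] a. apply NNPP; intros Hna. apply (Hg i); [eauto|]. rewrite <- h2. exact h1.
  - intros H q. eapply (uf_sub _ HU); [|exact H]. intros i h. apply h.
Qed.

Theorem los φ : forall rr : nat -> I -> A,
  @sat L ultrapower (fun x => ucls (rr x)) φ <-> U (fun i => sat (fun x => rr x i) φ).
Proof.
  induction φ as [| t1 t2 | Rl ts | φ1 IH1 φ2 IH2 | n φ IH]; intros rr; simpl.
  - split; [tauto|]. apply uf_not_empty, HU.
  - rewrite !ultrapower_t_eval, ucls_eq. tauto.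
  - assert (E : (fun j => @t_eval L ultrapower (fun x => ucls (rr x)) (ts j)) =
                (fun j => ucls (fun i => t_eval (fun x => rr x i) (ts j))))
      by (apply functional_extensionality; intros; apply ultrapower_t_eval).
    change (U (fun i => rel_int A Rl (fun j =>
               urep ((fun j => @t_eval L ultrapower (fun x => ucls (rr x)) (ts j)) j) i)) <->
            U (fun i => rel_int A Rl (fun j => t_eval (fun x => rr x i) (ts j)))).
    rewrite E. apply (uf_iff HU).
    eapply (uf_sub _ HU); [|exact (urep_ucls_fin _ (fun j i => t_eval (fun x => rr x i) (ts j)))].
    intros i h. rewrite h. tauto.
  - rewrite IH1, IH2. symmetry. apply uf_impl, HU.
  - apply los_all, IH.
Qed.

Lemma los_ext φ (v : nat -> ultrapower) (rr : nat -> I -> A) :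
  (forall x, v x = ucls (rr x)) -> (sat v φ <-> U (fun i => sat (fun x => rr x i) φ)).
Proof. intros H. rewrite (sat_ext _ _ _ _ H). apply los. Qed.

Definition diag (a : A) : ultrapower := ucls (fun _ => a).

Lemma diag_elementary : elementary diag.
Proof.
  intros φ v. unfold diag. rewrite (los φ (fun x _ => v x)). symmetry. apply uf_const, HU.
Qed.

Lemma ultrapower_sat2 k m φ (fa : Fin.t k -> I -> A) (fb : Fin.t m -> I -> A) :
  @sat2 L ultrapower k m φ (fun j => ucls (fa j)) (fun j => ucls (fb j)) <->
  U (fun i => sat2 φ (fun j => fa j i) (fun j => fb j i)).
Proof.
  unfold sat2. apply los_ext. intros x. unfold env2.
  destruct (lt_dec x k); [reflexivity|]. destruct (lt_dec (x - k) m); reflexivity.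
Qed.

End Ultrapower.

Lemma ultrapower_realize {L : signature} (A : structure L) (V : Type@{structure.u0})
  (C : ((V -> A) -> Prop) -> Prop) :
  (forall l, (forall c, In c l -> C c) -> exists e : V -> A, forall c, In c l -> c e) ->
  exists (I : Type@{structure.u0}) (U : (I -> Prop) -> Prop), ultrafilter U /\
    exists e : V -> I -> A, forall c, C c -> U (fun i => c (fun v => e v i)).
Proof.
  intros Hfin.
  destruct (ultrafilter_on_lists {c | C c}) as [U [HU HUin]].
  destruct (choice_fun (fun _ => witness A)
              (fun (Φ : list {c | C c}) (e : V -> A) => forall c, In c (map (@proj1_sig _ _) Φ) -> c e))
    as [e He].
  exists (list {c | C c}), U. split; [exact HU|].
  exists (fun v Φ => e Φ v). intros c Hc.
  eapply (uf_sub _ HU); [|exact (HUin (exist _ c Hc))]. intros Φ HΦ.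
  apply He; [|apply (in_map (@proj1_sig _ _) _ _ HΦ)].
  apply Hfin. intros c' Hc'. apply in_map_iff in Hc'. destruct Hc' as [[c'' h] [<- _]]. exact h.
Qed.

(** * The direct limit of an elementary self-embedding *)

(* The limit of [B --H--> B --H--> B --> ...]: the class of [(n, x)] stands for
   [H^-n x], and [H] becomes an automorphism. *)
Section DirectLimit.
Context {L : signature} (B : structure L) (H : B -> B) (HH : elementary H).

Definition Hiter (n : nat) (x : B) : B := Nat.iter n H x.

Lemma Hiter_add a b x : Hiter (a + b) x = Hiter a (Hiter b x).
Proof. apply Nat.iter_add. Qed.
Lemma Hiter_comm a b x : Hiter a (Hiter b x) = Hiter b (Hiter a x).
Proof. rewrite <- !Hiter_add, Nat.add_comm; auto. Qed.
Lemma Hiter_elementary n : elementary (Hiter n).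
Proof. apply elementary_iter; auto. Qed.
Lemma Hiter_inj n x y : Hiter n x = Hiter n y -> x = y.
Proof. apply elementary_inj, Hiter_elementary. Qed.
Lemma Hiter_S_r n x : Hiter (S n) x = Hiter n (H x).
Proof. replace (S n) with (n + 1) by lia. apply Hiter_add. Qed.
Lemma Hiter_fun_int n F (a : Fin.t (fun_ar F) -> B) :
  Hiter n (fun_int B F a) = fun_int B F (fun j => Hiter n (a j)).
Proof. apply elementary_fun_int, Hiter_elementary. Qed.

Definition lim_eq (p q : nat * B) : Prop := Hiter (fst q) (snd p) = Hiter (fst p) (snd q).
Lemma lim_eq_refl p : lim_eq p p. Proof. reflexivity. Qed.
Lemma lim_eq_sym p q : lim_eq p q -> lim_eq q p. Proof. unfold lim_eq; auto. Qed.
Lemma lim_eq_trans p q r : lim_eq p q -> lim_eq q r -> lim_eq p r.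
Proof.
  unfold lim_eq. destruct p as [a x], q as [b y], r as [c z]; simpl. intros H1 H2.
  apply (Hiter_inj b). rewrite (Hiter_comm b c), H1, (Hiter_comm c a), H2, Hiter_comm. reflexivity.
Qed.

Definition lcls (p : nat * B) := cls lim_eq lim_eq_refl lim_eq_sym lim_eq_trans p.
Definition lrep (q : quot lim_eq lim_eq_refl) : nat * B := rep lim_eq lim_eq_refl q.
Lemma lcls_eq p q : lcls p = lcls q <-> lim_eq p q.
Proof. apply cls_eq. Qed.
Lemma lrep_lcls p : lim_eq (lrep (lcls p)) p.
Proof. apply rep_cls. Qed.
Lemma lcls_lrep q : lcls (lrep q) = q.
Proof. apply cls_rep. Qed.

(* the representative of [p] at level [n ≥ fst p] *)
Definition lift (p : nat * B) (n : nat) : B := Hiter (n - fst p) (snd p).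

Lemma lift_eq p q n : lim_eq p q -> fst p <= n -> fst q <= n -> lift p n = lift q n.
Proof.
  unfold lim_eq, lift. destruct p as [a x], q as [b y]; simpl. intros E Ha Hb.
  apply (Hiter_inj (a + b)). rewrite <- !Hiter_add.
  replace (a + b + (n - a)) with (n + b) by lia. replace (a + b + (n - b)) with (n + a) by lia.
  rewrite !Hiter_add, E, Hiter_comm. reflexivity.
Qed.

Lemma lim_eq_lift p n : fst p <= n -> lim_eq p (n, lift p n).
Proof. unfold lim_eq, lift. destruct p as [a x]; simpl. intros Ha. rewrite <- Hiter_add. f_equal. lia. Qed.

Lemma lift_up p n n' : fst p <= n -> n <= n' -> lift p n' = Hiter (n' - n) (lift p n).
Proof. unfold lift; intros; rewrite <- Hiter_add. f_equal. lia. Qed.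

Lemma lift_lrep_lcls n y n0 : fst (lrep (lcls (n, y))) <= n0 ->
  Hiter n (lift (lrep (lcls (n, y))) n0) = Hiter n0 y.
Proof.
  intros Hn0. transitivity (lift (lrep (lcls (n, y))) (n + n0)).
  { rewrite (lift_up _ n0 (n + n0)) by (auto; lia). f_equal; lia. }
  rewrite (lift_eq _ (n, y) (n + n0)); [|apply lrep_lcls|lia|simpl; lia].
  unfold lift; simpl. f_equal. lia.
Qed.

Definition direct_limit : structure L :=
  @Structure L (quot lim_eq lim_eq_refl) (lcls (0, witness B))
    (fun F a => let n := fin_max (fun j => fst (lrep (a j))) in
                lcls (n, fun_int B F (fun j => lift (lrep (a j)) n)))
    (fun Rl a => let n := fin_max (fun j => fst (lrep (a j))) in
                 rel_int B Rl (fun j => lift (lrep (a j)) n)).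

Lemma direct_limit_t_eval (r : nat -> nat * B) t n :
  (forall x, x < term_bound t -> fst (r x) <= n) ->
  @t_eval L direct_limit (fun x => lcls (r x)) t = lcls (n, t_eval (fun x => lift (r x) n) t).
Proof.
  induction t as [x|F ts IH]; simpl; intros Hb.
  - apply lcls_eq, lim_eq_lift, Hb. lia.
  - set (q := fun j => @t_eval L direct_limit (fun x => lcls (r x)) (ts j)).
    assert (E : forall j, q j = lcls (n, t_eval (fun x => lift (r x) n) (ts j))).
    { intros j. apply IH. intros x Hx. apply Hb. pose proof (term_bound_arg F ts j). simpl in *; lia. }
    change (lcls (fin_max (fun j => fst (lrep (q j))),
                  fun_int B F (fun j => lift (lrep (q j)) (fin_max (fun j => fst (lrep (q j))))))
            = lcls (n, fun_int B F (fun j => t_eval (fun x => lift (r x) n) (ts j)))).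
    apply lcls_eq. unfold lim_eq. simpl. rewrite !Hiter_fun_int. f_equal.
    apply functional_extensionality; intros j. rewrite E. apply lift_lrep_lcls.
    rewrite <- E. apply (fin_max_ge _ j (fun j => fst (lrep (q j)))).
Qed.

Lemma direct_limit_rel (r : nat -> nat * B) Rl (ts : Fin.t (rel_ar Rl) -> term L) n :
  (forall x, x < formula_bound (f_rel Rl ts) -> fst (r x) <= n) ->
  (@sat L direct_limit (fun x => lcls (r x)) (f_rel Rl ts) <->
   rel_int B Rl (fun j => t_eval (fun x => lift (r x) n) (ts j))).
Proof.
  intros Hb. simpl.
  set (q := fun j => @t_eval L direct_limit (fun x => lcls (r x)) (ts j)).
  assert (E : forall j, q j = lcls (n, t_eval (fun x => lift (r x) n) (ts j))).
  { intros j. apply direct_limit_t_eval. intros x Hx. apply Hb. simpl.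
    pose proof (fin_max_ge _ j (fun j => term_bound (ts j))). simpl in *; lia. }
  change (rel_int B Rl (fun j => lift (lrep (q j)) (fin_max (fun j => fst (lrep (q j))))) <->
          rel_int B Rl (fun j => t_eval (fun x => lift (r x) n) (ts j))).
  rewrite (elementary_rel_int _ _ _ (Hiter_elementary n)).
  rewrite (elementary_rel_int _ _ _ (Hiter_elementary (fin_max (fun j => fst (lrep (q j))))) Rl
             (fun j => t_eval _ (ts j))).
  match goal with |- rel_int B Rl ?a <-> rel_int B Rl ?b => replace a with b; [tauto|] end.
  apply functional_extensionality; intros j. rewrite E. symmetry. apply lift_lrep_lcls.
  rewrite <- E. apply (fin_max_ge _ j (fun j => fst (lrep (q j)))).
Qed.

Lemma direct_limit_sat φ : forall (r : nat -> nat * B) n,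
  (forall x, x < formula_bound φ -> fst (r x) <= n) ->
  (@sat L direct_limit (fun x => lcls (r x)) φ <-> sat (fun x => lift (r x) n) φ).
Proof.
  induction φ as [| t1 t2 | Rl ts | φ1 IH1 φ2 IH2 | y φ IH]; intros r n Hb.
  - simpl; tauto.
  - simpl in *. rewrite (direct_limit_t_eval r t1 n), (direct_limit_t_eval r t2 n); try (intros; apply Hb; lia).
    rewrite lcls_eq. unfold lim_eq; simpl. split; [apply Hiter_inj|congruence].
  - apply direct_limit_rel, Hb.
  - simpl in *. rewrite (IH1 r n), (IH2 r n); try tauto; intros; apply Hb; lia.
  - simpl in *. split.
    + intros Hall a. specialize (Hall (lcls (n, a))).
      rewrite (sat_ext direct_limit _ _ (fun x => lcls (if Nat.eqb x y then (n, a) else r x))) in Hall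
        by (intros x; unfold upd; destruct (Nat.eqb x y); auto).
      rewrite (IH _ n) in Hall by (intros x Hx; destruct (Nat.eqb x y); simpl; auto).
      revert Hall. apply sat_ext. intros x; unfold upd; destruct (Nat.eqb x y); auto.
      unfold lift; simpl. rewrite Nat.sub_diag. reflexivity.
    + intros Hall q.
      set (n' := Nat.max n (fst (lrep q))).
      rewrite (sat_ext direct_limit _ _ (fun x => lcls (if Nat.eqb x y then lrep q else r x)))
        by (intros x; unfold upd; destruct (Nat.eqb x y); auto; symmetry; apply lcls_lrep).
      rewrite (IH _ n')
        by (intros x Hx; destruct (Nat.eqb x y); simpl; [|specialize (Hb x Hx)]; unfold n'; lia).
      assert (H' : sat (fun x => lift (r x) n') (f_all y φ)).
      { apply (sat_bound_ext _ _ (fun x => Hiter (n' - n) (lift (r x) n))).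
        - intros x Hx. symmetry. apply lift_up; [apply Hb; auto|unfold n'; lia].
        - apply (Hiter_elementary (n' - n) (f_all y φ) (fun x => lift (r x) n)). exact Hall. }
      simpl in H'. specialize (H' (lift (lrep q) n')). revert H'. apply sat_ext.
      intros x; unfold upd; destruct (Nat.eqb x y); auto.
Qed.

Lemma direct_limit_sat_rep φ (v : nat -> direct_limit) n :
  (forall x, x < formula_bound φ -> fst (lrep (v x)) <= n) ->
  (sat v φ <-> sat (fun x => lift (lrep (v x)) n) φ).
Proof.
  intros Hn. rewrite <- direct_limit_sat by exact Hn.
  apply sat_ext. intros x. symmetry. apply lcls_lrep.
Qed.

Definition lim_in (x : B) : direct_limit := lcls (0, x).

Lemma lim_in_elementary : elementary lim_in.
Proof.
  intros φ v. unfold lim_in. rewrite (direct_limit_sat φ (fun x => (0, v x)) 0); [|intros; simpl; lia].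
  apply sat_ext. intros x; unfold lift; simpl. reflexivity.
Qed.

Definition lim_shift (q : direct_limit) : direct_limit := lcls (fst (lrep q), H (snd (lrep q))).
Definition lim_unshift (q : direct_limit) : direct_limit := lcls (S (fst (lrep q)), snd (lrep q)).

Lemma lim_shift_lcls p : lim_shift (lcls p) = lcls (fst p, H (snd p)).
Proof.
  apply lcls_eq. pose proof (lrep_lcls p) as E. unfold lim_eq in *; simpl in *.
  rewrite <- !Hiter_S_r. simpl. f_equal. exact E.
Qed.

Lemma lim_unshift_lcls p : lim_unshift (lcls p) = lcls (S (fst p), snd p).
Proof.
  apply lcls_eq. pose proof (lrep_lcls p) as E. unfold lim_eq in *; simpl in *.
  rewrite E. reflexivity.
Qed.

Lemma lim_shiftK q : lim_shift (lim_unshift q) = q.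
Proof.
  rewrite <- (lcls_lrep q), lim_unshift_lcls, lim_shift_lcls. apply lcls_eq.
  unfold lim_eq; simpl. rewrite <- Hiter_S_r. reflexivity.
Qed.

Lemma lim_unshiftK q : lim_unshift (lim_shift q) = q.
Proof.
  rewrite <- (lcls_lrep q), lim_shift_lcls, lim_unshift_lcls. apply lcls_eq.
  unfold lim_eq; simpl. rewrite <- Hiter_S_r. reflexivity.
Qed.

Lemma lim_shift_elementary : elementary lim_shift.
Proof.
  intros φ v.
  pose (n := max_below (formula_bound φ) (fun x => fst (lrep (v x)))).
  assert (Hn : forall x, x < formula_bound φ -> fst (lrep (v x)) <= n)
    by (intros x Hx; apply (max_below_ge _ (fun x => fst (lrep (v x)))); auto).
  rewrite (direct_limit_sat_rep φ v n Hn).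
  rewrite (direct_limit_sat φ (fun x => (fst (lrep (v x)), H (snd (lrep (v x))))) n Hn).
  rewrite (HH φ). apply sat_ext. intros x. unfold lift; simpl. rewrite <- Hiter_S_r. reflexivity.
Qed.

Definition lim_aut : automorphism direct_limit :=
  aut_of_elementary lim_shift lim_unshift lim_unshiftK lim_shiftK lim_shift_elementary.

Lemma lim_aut_in x : lim_aut (lim_in x) = lim_in (H x).
Proof. apply lim_shift_lcls. Qed.

End DirectLimit.

(** * Iterated ultrapowers *)

(* Given an elementary map [h] from [N0] into its ultrapower (at the level of
   representatives), the direct limit of the iterated ultrapowers [N0^(U^n)] carries an
   elementary self-map extending [h].  [Upow n] is the [n]-fold product of [U] on lists
   of length [n], and the class of [(n, f)] stands for the element of [N0^(U^n)] whose
   representative is [f] (which only looks at the first [n] entries of a list). *)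
Section IteratedUltrapower.
Context {L : signature} (N0 : structure L) {I : Type@{structure.u0}} (U : (I -> Prop) -> Prop)
  (HU : ultrafilter U) (h : N0 -> I -> N0)
  (Eh : forall φ (v : nat -> N0), sat v φ <-> U (fun i => sat (fun x => h (v x) i) φ)).

Fixpoint Upow (n : nat) (P : list I -> Prop) : Prop :=
  match n with 0 => P nil | S n' => U (fun i => Upow n' (fun l => P (l ++ i :: nil))) end.

Lemma Upow_ultrafilter n : ultrafilter (Upow n).
Proof.
  induction n as [|n IH]; constructor; simpl.
  - constructor.
  - intros A B H; apply H.
  - intros A B HA HB; split; auto.
  - auto.
  - intros A. apply classic.
  - apply uf_all; auto. intros; apply uf_setT, IH.
  - intros A B H. apply (uf_sub _ HU). intros i. apply (uf_sub _ IH). auto.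
  - intros A B HA HB. eapply (uf_sub _ HU); [|exact (uf_meet _ HU _ _ HA HB)].
    intros i [h1 h2]. apply (uf_meet _ IH); auto.
  - intros H. apply (uf_not_empty _ HU). eapply (uf_sub _ HU); [|exact H]. intros i. apply uf_not_empty, IH.
  - intros A. destruct (uf_or_compl _ HU (fun i => Upow n (fun l => A (l ++ i :: nil)))) as [H|H];
      [left; auto|right].
    eapply (uf_sub _ HU); [|exact H]. intros i Hi.
    destruct (uf_or_compl _ IH (fun l => A (l ++ i :: nil))); cbv beta in *; tauto.
Qed.

Lemma Upow_length n : Upow n (fun l => length l = n).
Proof.
  induction n as [|n IH]; simpl; auto.
  apply (uf_all HU). intros i.
  eapply (uf_sub _ (Upow_ultrafilter n)); [|exact IH].
  intros l Hl. cbv beta. rewrite length_app, Hl. simpl. lia.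
Qed.

Lemma Upow_ext n (P P' : list I -> Prop) :
  (forall l, length l = n -> (P l <-> P' l)) -> (Upow n P <-> Upow n P').
Proof.
  intros H. apply (uf_iff (Upow_ultrafilter n)).
  eapply (uf_sub _ (Upow_ultrafilter n)); [|exact (Upow_length n)]. auto.
Qed.

Lemma Upow_S_head n : forall P, Upow (S n) P <-> Upow n (fun l => U (fun i => P (i :: l))).
Proof.
  induction n as [|n IH]; intros P; simpl; [tauto|].
  split; intros H; (eapply (uf_sub _ HU); [|exact H]); intros o Ho;
    apply (IH (fun l => P (l ++ o :: nil))); exact Ho.
Qed.

Lemma Upow_firstn_S n P : Upow (S n) (fun l => P (firstn n l)) <-> Upow n P.
Proof.
  simpl. rewrite <- (uf_const HU (Upow n P)).
  split; intros H; (eapply (uf_sub _ HU); [|exact H]); intros i Hi;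
    revert Hi; apply Upow_ext; intros l Hl;
    rewrite firstn_app, Hl, Nat.sub_diag, firstn_all2 by lia; simpl; rewrite app_nil_r; tauto.
Qed.

Lemma Upow_firstn m n P : m <= n -> (forall l, P l <-> P (firstn m l)) -> (Upow n P <-> Upow m P).
Proof.
  intros Hmn HP. replace n with ((n - m) + m) by lia. clear Hmn.
  induction (n - m) as [|d IH]; simpl plus; [tauto|].
  rewrite <- IH, <- (Upow_firstn_S (d + m) P). apply Upow_ext. intros l Hl.
  rewrite (HP l), (HP (firstn (d + m) l)), firstn_firstn. replace (Nat.min m (d + m)) with m by lia. tauto.
Qed.

Definition view (p : nat * (list I -> N0)) (l : list I) : N0 := snd p (firstn (fst p) l).

Lemma view_firstn p m l : fst p <= m -> view p (firstn m l) = view p l.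
Proof. intros H. unfold view. rewrite firstn_firstn. do 2 f_equal. lia. Qed.

Definition iu_eq (p q : nat * (list I -> N0)) : Prop :=
  Upow (Nat.max (fst p) (fst q)) (fun l => view p l = view q l).

Lemma iu_eq_at p q n : Nat.max (fst p) (fst q) <= n ->
  (iu_eq p q <-> Upow n (fun l => view p l = view q l)).
Proof.
  intros H. unfold iu_eq. symmetry. apply Upow_firstn; auto. intros l.
  rewrite !view_firstn by lia. tauto.
Qed.

Lemma iu_eq_refl p : iu_eq p p.
Proof. apply (uf_all (Upow_ultrafilter _)). auto. Qed.
Lemma iu_eq_sym p q : iu_eq p q -> iu_eq q p.
Proof.
  unfold iu_eq. intros H. rewrite Nat.max_comm.
  eapply (uf_sub _ (Upow_ultrafilter _)); [|exact H]. auto.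
Qed.
Lemma iu_eq_trans p q r : iu_eq p q -> iu_eq q r -> iu_eq p r.
Proof.
  set (n := Nat.max (fst p) (Nat.max (fst q) (fst r))).
  rewrite (iu_eq_at p q n), (iu_eq_at q r n), (iu_eq_at p r n) by lia.
  intros H1 H2. eapply (uf_sub _ (Upow_ultrafilter n)); [|exact (uf_meet _ (Upow_ultrafilter n) _ _ H1 H2)].
  intros l [-> ->]; auto.
Qed.

Definition icls (p : nat * (list I -> N0)) := cls iu_eq iu_eq_refl iu_eq_sym iu_eq_trans p.
Definition irep (q : quot iu_eq iu_eq_refl) : nat * (list I -> N0) := rep iu_eq iu_eq_refl q.
Lemma icls_eq p q : icls p = icls q <-> iu_eq p q.
Proof. apply cls_eq. Qed.
Lemma irep_icls p : iu_eq (irep (icls p)) p.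
Proof. apply rep_cls. Qed.
Lemma icls_irep q : icls (irep q) = q.
Proof. apply cls_rep. Qed.

Definition iter_ultrapower : structure L :=
  @Structure L (quot iu_eq iu_eq_refl) (icls (0, fun _ => witness N0))
    (fun F a => let n := fin_max (fun j => fst (irep (a j))) in
                icls (n, fun l => fun_int N0 F (fun j => view (irep (a j)) l)))
    (fun Rl a => let n := fin_max (fun j => fst (irep (a j))) in
                 Upow n (fun l => rel_int N0 Rl (fun j => view (irep (a j)) l))).

Lemma irep_args {a : nat} (q : Fin.t a -> iter_ultrapower) (y : Fin.t a -> list I -> N0) n N :
  (forall j, q j = icls (n, y j)) -> (forall j, fst (irep (q j)) <= N) -> n <= N ->
  Upow N (fun l => forall j, view (irep (q j)) l = y j (firstn n l)).
Proof.
  intros E Hq HnN. apply (uf_forall_fin (Upow_ultrafilter N)). intros j.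
  refine (proj1 (iu_eq_at (irep (q j)) (n, y j) N _) _); [specialize (Hq j); simpl; lia|].
  rewrite E. apply irep_icls.
Qed.

Lemma iter_ultrapower_t_eval (r : nat -> nat * (list I -> N0)) t n :
  (forall x, x < term_bound t -> fst (r x) <= n) ->
  @t_eval L iter_ultrapower (fun x => icls (r x)) t = icls (n, fun l => t_eval (fun x => view (r x) l) t).
Proof.
  induction t as [x|F ts IH]; simpl; intros Hb.
  - apply icls_eq, (iu_eq_at _ _ n); [simpl; specialize (Hb x); lia|].
    apply (uf_all (Upow_ultrafilter n)). intros l. apply eq_sym, view_firstn, Hb. simpl; lia.
  - set (q := fun j => @t_eval L iter_ultrapower (fun x => icls (r x)) (ts j)).
    assert (E : forall j, q j = icls (n, fun l => t_eval (fun x => view (r x) l) (ts j))).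
    { intros j. apply IH. intros x Hx. apply Hb. pose proof (term_bound_arg F ts j). simpl in *; lia. }
    change (icls (fin_max (fun j => fst (irep (q j))),
              fun l => fun_int N0 F (fun j => view (irep (q j)) l))
      = icls (n, fun l => fun_int N0 F (fun j => t_eval (fun x => view (r x) l) (ts j)))).
    set (n0 := fin_max (fun j => fst (irep (q j)))).
    assert (Hq : forall j, fst (irep (q j)) <= n0)
      by (intros j; apply (fin_max_ge _ j (fun j => fst (irep (q j))))).
    set (N := Nat.max n0 n).
    apply icls_eq, (iu_eq_at _ _ N); [simpl; lia|].
    pose proof (irep_args q _ n N E (fun j => Nat.le_trans _ _ _ (Hq j) (Nat.le_max_l n0 n))
                  (Nat.le_max_r n0 n)) as Hargs.
    eapply (uf_sub _ (Upow_ultrafilter N)); [|exact Hargs].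
    intros l Hl. unfold view at 1 3; cbn [fst snd].
    f_equal. apply functional_extensionality; intros j. rewrite view_firstn by apply Hq. apply Hl.
Qed.

Lemma iter_ultrapower_rel (r : nat -> nat * (list I -> N0)) Rl (ts : Fin.t (rel_ar Rl) -> term L) n :
  (forall x, x < formula_bound (f_rel Rl ts) -> fst (r x) <= n) ->
  (@sat L iter_ultrapower (fun x => icls (r x)) (f_rel Rl ts) <->
   Upow n (fun l => rel_int N0 Rl (fun j => t_eval (fun x => view (r x) l) (ts j)))).
Proof.
  intros Hb. simpl.
  assert (Hts : forall j x, t_occurs x (ts j) -> fst (r x) <= n).
  { intros j x Hx. apply Hb. pose proof (t_occurs_lt_bound _ _ Hx).
    pose proof (fin_max_ge _ j (fun j => term_bound (ts j))). simpl in *; lia. }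
  set (q := fun j => @t_eval L iter_ultrapower (fun x => icls (r x)) (ts j)).
  assert (E : forall j, q j = icls (n, fun l => t_eval (fun x => view (r x) l) (ts j))).
  { intros j. apply iter_ultrapower_t_eval. intros x Hx. apply Hb. simpl.
    pose proof (fin_max_ge _ j (fun j => term_bound (ts j))). simpl in *; lia. }
  change (Upow (fin_max (fun j => fst (irep (q j)))) (fun l => rel_int N0 Rl (fun j => view (irep (q j)) l)) <->
          Upow n (fun l => rel_int N0 Rl (fun j => t_eval (fun x => view (r x) l) (ts j)))).
  set (n0 := fin_max (fun j => fst (irep (q j)))).
  assert (Hq : forall j, fst (irep (q j)) <= n0)
    by (intros j; apply (fin_max_ge _ j (fun j => fst (irep (q j))))).
  set (N := Nat.max n0 n).
  assert (Hfirst : forall l j, t_eval (fun x => view (r x) (firstn n l)) (ts j) =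
                              t_eval (fun x => view (r x) l) (ts j)).
  { intros l j. apply t_eval_coinc. intros x Hx. apply view_firstn, (Hts j x Hx). }
  assert (HL : forall P : (Fin.t (rel_ar Rl) -> N0) -> Prop,
            Upow n0 (fun l => P (fun j => view (irep (q j)) l)) <->
            Upow N (fun l => P (fun j => view (irep (q j)) l))).
  { intros P. symmetry. apply Upow_firstn; [lia|]. intros l.
    replace (fun j => view (irep (q j)) (firstn n0 l)) with (fun j => view (irep (q j)) l); [tauto|].
    apply functional_extensionality; intros j. rewrite view_firstn; auto. }
  assert (HR : forall P : (Fin.t (rel_ar Rl) -> N0) -> Prop,
            Upow n (fun l => P (fun j => t_eval (fun x => view (r x) l) (ts j))) <->
            Upow N (fun l => P (fun j => t_eval (fun x => view (r x) l) (ts j)))).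
  { intros P. symmetry. apply Upow_firstn; [lia|]. intros l.
    replace (fun j => t_eval (fun x => view (r x) (firstn n l)) (ts j))
      with (fun j => t_eval (fun x => view (r x) l) (ts j)); [tauto|].
    apply functional_extensionality; intros j. symmetry. apply Hfirst. }
  rewrite (HL (rel_int N0 Rl)), (HR (rel_int N0 Rl)).
  apply (uf_iff (Upow_ultrafilter N)).
  pose proof (irep_args q _ n N E (fun j => Nat.le_trans _ _ _ (Hq j) (Nat.le_max_l n0 n))
                (Nat.le_max_r n0 n)) as Hargs.
  eapply (uf_sub _ (Upow_ultrafilter N)); [|exact Hargs].
  intros l Hl.
  replace (fun j => view (irep (q j)) l) with (fun j => t_eval (fun x => view (r x) l) (ts j)); [tauto|].
  apply functional_extensionality; intros j. rewrite Hl, Hfirst. reflexivity.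
Qed.

Lemma iter_ultrapower_all y φ (r : nat -> nat * (list I -> N0)) n :
  (forall r' n', (forall x, x < formula_bound φ -> fst (r' x) <= n') ->
     (@sat L iter_ultrapower (fun x => icls (r' x)) φ <->
      Upow n' (fun l => sat (fun x => view (r' x) l) φ))) ->
  (forall x, x < formula_bound φ -> fst (r x) <= n) ->
  ((forall q : iter_ultrapower, sat (@upd L iter_ultrapower (fun x => icls (r x)) y q) φ) <->
   Upow n (fun l => forall a, sat (upd (fun x => view (r x) l) y a) φ)).
Proof.
  intros IH Hb.
  assert (Hupd : forall p x, @upd L iter_ultrapower (fun x => icls (r x)) y (icls p) x =
                             icls (if Nat.eqb x y then p else r x))
    by (intros p x; unfold upd; destruct (Nat.eqb x y); auto).
  split.
  - intros Hall.
    destruct (choice_fun (witness N0) (fun l a => ~ sat (upd (fun x => view (r x) l) y a) φ)) as [g Hg].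
    specialize (Hall (icls (n, g))). rewrite (sat_ext _ _ _ _ (Hupd (n, g))), (IH _ n) in Hall
      by (intros x Hx; destruct (Nat.eqb x y); simpl; auto).
    eapply (uf_sub _ (Upow_ultrafilter n)); [|exact (uf_meet _ (Upow_ultrafilter n) _ _ Hall (Upow_length n))].
    intros l [h1 h2] a. apply NNPP; intros Hna. apply (Hg l); [eauto|]. revert h1. apply sat_ext.
    intros x. unfold upd. destruct (Nat.eqb x y); auto. unfold view; simpl. rewrite firstn_all2 by lia. auto.
  - intros Hall q.
    set (n' := Nat.max n (fst (irep q))).
    rewrite <- (icls_irep q), (sat_ext _ _ _ _ (Hupd (irep q))), (IH _ n')
      by (intros x Hx; destruct (Nat.eqb x y); simpl; [|specialize (Hb x Hx)]; unfold n'; lia).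
    rewrite <- (Upow_firstn n n') in Hall; [|unfold n'; lia|].
    + eapply (uf_sub _ (Upow_ultrafilter n')); [|exact Hall]. intros l Hl. specialize (Hl (view (irep q) l)).
      revert Hl. apply sat_ext. intros x; unfold upd; destruct (Nat.eqb x y); auto.
    + intros l. split; intros HH a; specialize (HH a); revert HH; apply sat_bound_ext; intros x Hx;
        unfold upd; destruct (Nat.eqb x y); auto;
        (first [apply view_firstn | symmetry; apply view_firstn]); apply Hb; auto.
Qed.

Lemma iter_ultrapower_sat φ : forall (r : nat -> nat * (list I -> N0)) n,
  (forall x, x < formula_bound φ -> fst (r x) <= n) ->
  (@sat L iter_ultrapower (fun x => icls (r x)) φ <-> Upow n (fun l => sat (fun x => view (r x) l) φ)).
Proof.
  induction φ as [| t1 t2 | Rl ts | φ1 IH1 φ2 IH2 | y φ IH]; intros r n Hb.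
  - simpl. split; [tauto|]. apply uf_not_empty, Upow_ultrafilter.
  - simpl in *. rewrite (iter_ultrapower_t_eval r t1 n), (iter_ultrapower_t_eval r t2 n), icls_eq,
      (iu_eq_at _ _ n) by (simpl; try lia; intros; apply Hb; lia).
    apply Upow_ext. intros l Hl. unfold view at 1 2; simpl. rewrite (firstn_all2 (n:=n) l) by lia. tauto.
  - apply iter_ultrapower_rel, Hb.
  - simpl in *. rewrite (IH1 r n), (IH2 r n) by (intros; apply Hb; lia).
    symmetry. apply uf_impl, Upow_ultrafilter.
  - apply iter_ultrapower_all; auto.
Qed.

Lemma iter_ultrapower_sat_rep φ (v : nat -> iter_ultrapower) n :
  (forall x, x < formula_bound φ -> fst (irep (v x)) <= n) ->
  (sat v φ <-> Upow n (fun l => sat (fun x => view (irep (v x)) l) φ)).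
Proof.
  intros Hn. rewrite <- iter_ultrapower_sat by exact Hn.
  apply sat_ext. intros x. symmetry. apply icls_irep.
Qed.

Definition iu_in (x : N0) : iter_ultrapower := icls (0, fun _ => x).

Lemma iu_in_elementary : elementary iu_in.
Proof.
  intros φ v. unfold iu_in.
  rewrite (iter_ultrapower_sat φ (fun x => (0, fun _ => v x)) 0); [|intros; simpl; lia].
  simpl. reflexivity.
Qed.

Definition shift_rep (p : nat * (list I -> N0)) : nat * (list I -> N0) :=
  (S (fst p), fun l => match l with nil => witness N0 | i :: l' => h (snd p l') i end).

Lemma view_shift_rep p i l : view (shift_rep p) (i :: l) = h (view p l) i.
Proof. reflexivity. Qed.

Lemma iu_eq_shift_rep p q : iu_eq p q -> iu_eq (shift_rep p) (shift_rep q).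
Proof.
  intros E. set (M := Nat.max (fst p) (fst q)).
  rewrite (iu_eq_at _ _ (S M)), Upow_S_head by (simpl; unfold M; lia).
  rewrite (iu_eq_at _ _ M) in E by (unfold M; lia).
  eapply (uf_sub _ (Upow_ultrafilter M)); [|exact E]. intros l El. cbv beta.
  apply (uf_all HU). intros i. rewrite !view_shift_rep, El. reflexivity.
Qed.

Definition iu_shift (q : iter_ultrapower) : iter_ultrapower := icls (shift_rep (irep q)).

Lemma iu_shift_elementary : elementary iu_shift.
Proof.
  intros φ v.
  pose (n := max_below (formula_bound φ) (fun x => fst (irep (v x)))).
  assert (Hn : forall x, x < formula_bound φ -> fst (irep (v x)) <= n)
    by (intros x Hx; apply (max_below_ge _ (fun x => fst (irep (v x)))); auto).
  rewrite (iter_ultrapower_sat_rep φ v n Hn).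
  unfold iu_shift. rewrite (iter_ultrapower_sat φ (fun x => shift_rep (irep (v x))) (S n))
    by (intros x Hx; simpl; specialize (Hn x Hx); lia).
  rewrite Upow_S_head. apply (uf_iff (Upow_ultrafilter n)), (uf_all (Upow_ultrafilter n)).
  intros l. apply Eh.
Qed.

Lemma iu_shift_in x y : U (fun i => h x i = y) -> iu_shift (iu_in x) = iu_in y.
Proof.
  intros Hxy. unfold iu_shift, iu_in. transitivity (icls (shift_rep (0, fun _ => x))).
  - apply icls_eq, iu_eq_shift_rep, irep_icls.
  - apply icls_eq. rewrite (iu_eq_at _ _ 1), Upow_S_head by (simpl; lia). exact Hxy.
Qed.

End IteratedUltrapower.

(** * Ramsey's theorem *)

Definition strict_incr (g : nat -> nat) : Prop := forall i, g i < g (S i).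

Definition depends_below (R : nat) (col : (nat -> nat) -> Prop) : Prop :=
  forall g g', (forall i, i < R -> g i = g' i) -> (col g <-> col g').

Lemma strict_incr_lt g : strict_incr g -> forall a b, a < b -> g a < g b.
Proof.
  intros Hg a b Hab. induction b; [lia|]. destruct (Nat.eq_dec a b); [subst; apply Hg|].
  specialize (IHb ltac:(lia)). specialize (Hg b). lia.
Qed.

Lemma strict_incr_lt_rev g : strict_incr g -> forall a b, g a < g b -> a < b.
Proof.
  intros Hg a b H. destruct (Nat.lt_ge_cases a b) as [h|h]; auto.
  destruct (Nat.eq_dec a b); [subst; lia|]. pose proof (strict_incr_lt g Hg b a ltac:(lia)). lia.
Qed.

Lemma strict_incr_inj g : strict_incr g -> forall a b, g a = g b -> a = b.
Proof.
  intros Hg a b H. destruct (Nat.lt_total a b) as [h|[h|h]]; auto;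
    pose proof (strict_incr_lt g Hg _ _ h); lia.
Qed.

Lemma strict_incr_comp g h : strict_incr g -> strict_incr h -> strict_incr (fun i => g (h i)).
Proof. intros Hg Hh i. apply strict_incr_lt; auto. Qed.
Lemma strict_incr_S : strict_incr S. Proof. intros i; lia. Qed.
Lemma strict_incr_id : strict_incr (fun i => i). Proof. intros i; lia. Qed.

Lemma strict_incr_enum (X : nat -> Prop) : (forall N, exists i, N <= i /\ X i) ->
  exists e, strict_incr e /\ forall t, X (e t).
Proof.
  intros HX. destruct (choice_fun 0 (fun N i => N <= i /\ X i)) as [pick Hp].
  exists (fix e t := match t with 0 => pick 0 | S t => pick (S (e t)) end). split.
  - intros t. cbn. match goal with |- _ < pick (S ?n) => destruct (Hp (S n) (HX _)); lia end.
  - intros [|t]; apply Hp, HX.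
Qed.

Lemma infinite_pigeonhole (P : nat -> Prop) : exists Pf : Prop, forall N, exists i, N <= i /\ (P i <-> Pf).
Proof.
  destruct (classic (forall N, exists i, N <= i /\ P i)) as [H|H].
  - exists True. intros N. destruct (H N) as [i [h1 h2]]. exists i; split; tauto.
  - exists False. apply not_all_ex_not in H. destruct H as [N0 HN0]. intros N.
    exists (Nat.max N N0). split; [lia|]. split; [|tauto]. intros Hp. apply HN0.
    exists (Nat.max N N0). split; [lia|auto].
Qed.

Definition ncons (x : nat) (f : nat -> nat) : nat -> nat := fun i => match i with 0 => x | S i => f i end.

(* [chain (S n)] keeps the head of [chain n] and thins out its tail with [sel];
   the heads [chain n 0] form the homogeneous sequence in Ramsey's theorem. *)
Section ThinningChain.
Variable sel : nat -> (nat -> nat) -> nat -> nat.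
Hypothesis sel_incr : forall x F, strict_incr (sel x F).

Fixpoint chain (n : nat) : nat -> nat :=
  match n with
  | 0 => fun i => i
  | S n => fun t => chain n (S (sel (chain n 0) (fun i => chain n (S i)) t))
  end.

Lemma chain_incr n : strict_incr (chain n).
Proof.
  induction n; simpl; [apply strict_incr_id|]. intros t. apply strict_incr_lt; auto.
  pose proof (sel_incr (chain n 0) (fun i => chain n (S i)) t). lia.
Qed.

Lemma chain_sub d n : exists q, strict_incr q /\ forall t, chain (d + n) t = chain n (q t).
Proof.
  induction d.
  - exists (fun t => t); split; [apply strict_incr_id|]; reflexivity.
  - destruct IHd as [q [Hq Hqe]]. simpl.
    exists (fun t => q (S (sel (chain (d + n) 0) (fun i => chain (d + n) (S i)) t))). split.
    + apply strict_incr_comp; auto. intros t.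
      pose proof (sel_incr (chain (d + n) 0) (fun i => chain (d + n) (S i)) t). lia.
    + intros t. apply Hqe.
Qed.

Lemma chain_heads_incr : strict_incr (fun n => chain n 0).
Proof. intros n. simpl. apply strict_incr_lt; [apply chain_incr|lia]. Qed.

Lemma chain_head_in_tail n m : n < m -> exists u, chain (S n) u = chain m 0.
Proof.
  intros Hnm. destruct (chain_sub (m - S n) (S n)) as [q [_ Hqe]]. exists (q 0).
  rewrite <- Hqe. f_equal. lia.
Qed.

End ThinningChain.

Theorem ramsey R : forall col, depends_below R col ->
  exists hh, strict_incr hh /\ exists P : Prop, forall g, strict_incr g -> (col (fun i => hh (g i)) <-> P).
Proof.
  induction R as [|R IHR]; intros col Hloc.
  - exists (fun i => i). split; [apply strict_incr_id|]. exists (col (fun i => i)). intros g _. apply Hloc. lia.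
  - assert (Hch : forall x (F : nat -> nat), exists hh, strict_incr hh /\ exists P : Prop,
               forall g, strict_incr g -> (col (ncons x (fun i => F (hh (g i)))) <-> P)).
    { intros x F. apply (IHR (fun g => col (ncons x (fun i => F (g i))))). intros g g' Hgg. apply Hloc.
      intros [|i] Hi; simpl; auto. rewrite Hgg; auto; lia. }
    destruct (choice_fun (fun i => i) (fun (xF : nat * (nat -> nat)) hh => strict_incr hh /\ exists P : Prop,
               forall g, strict_incr g -> (col (ncons (fst xF) (fun i => snd xF (hh (g i)))) <-> P)))
      as [sel Hsel].
    destruct (choice_fun True (fun (xF : nat * (nat -> nat)) P =>
               forall g, strict_incr g -> (col (ncons (fst xF) (fun i => snd xF (sel xF (g i)))) <-> P)))
      as [Psel HPsel].
    set (sel' := fun x F => sel (x, F)).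
    assert (Hsel' : forall x F, strict_incr (sel' x F)) by (intros x F; apply (Hsel (x, F)), Hch).
    set (x := fun n => chain sel' n 0).
    destruct (infinite_pigeonhole (fun n => Psel (x n, fun i => chain sel' n (S i)))) as [Pf HPf].
    destruct (strict_incr_enum _ HPf) as [e [He HeX]].
    exists (fun t => x (e t)). split; [apply strict_incr_comp; auto; apply chain_heads_incr, Hsel'|].
    exists Pf. intros g Hg.
    set (i := e (g 0)).
    assert (Hlater : forall t, i < e (g (S t))) by
      (intros t; apply (strict_incr_lt e He), (strict_incr_lt g Hg); lia).
    destruct (choice_fun 0 (fun t u => chain sel' (S i) u = x (e (g (S t))))) as [G HG].
    assert (HG' : forall t, chain sel' (S i) (G t) = x (e (g (S t))))
      by (intros t; apply HG, chain_head_in_tail; auto).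
    assert (HGi : strict_incr G).
    { intros t. apply (strict_incr_lt_rev _ (chain_incr _ Hsel' (S i))). rewrite !HG'.
      apply strict_incr_lt; [apply chain_heads_incr, Hsel'|]. apply strict_incr_lt; auto. }
    replace (fun j => x (e (g j))) with (ncons (x i) (fun t => chain sel' (S i) (G t))).
    + rewrite <- (HeX (g 0)). apply (HPsel (x i, fun t => chain sel' i (S t))); auto.
      apply (proj2 (Hsel (x i, fun t => chain sel' i (S t)) (Hch _ _))).
    + apply functional_extensionality; intros [|t]; simpl; auto. exact (HG' t).
Qed.

Lemma ramsey_list {X : Type} (cols : list X) (R : X -> nat) (col : X -> (nat -> nat) -> Prop) :
  (forall c, depends_below (R c) (col c)) ->
  exists hh, strict_incr hh /\ forall c, In c cols -> forall g, strict_incr g ->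
    (col c (fun i => hh (g i)) <-> col c hh).
Proof.
  intros Hloc. induction cols as [|c cols IH].
  - exists (fun i => i). split; [apply strict_incr_id|]. intros c [].
  - destruct IH as [h1 [Hh1 Hhom1]].
    destruct (ramsey (R c) (fun g => col c (fun i => h1 (g i)))) as [h2 [Hh2 [P HP]]].
    { intros g g' Hgg. apply Hloc. intros i Hi. rewrite Hgg; auto. }
    exists (fun i => h1 (h2 i)). split; [apply strict_incr_comp; auto|].
    intros c' Hc' g Hg. destruct Hc' as [<-|Hc'].
    + rewrite (HP g Hg). rewrite <- (HP (fun i => i) strict_incr_id). tauto.
    + rewrite (Hhom1 c' Hc' (fun i => h2 (g i))) by (apply strict_incr_comp; auto).
      rewrite (Hhom1 c' Hc' h2 Hh2). tauto.
Qed.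

(** * Coding finite words *)

(* injective, with the leading 1 recording the length *)
Fixpoint word_code (w : list bool) : nat :=
  match w with nil => 1 | b :: w' => 2 * word_code w' + (if b then 1 else 0) end.

Lemma word_code_length w : length w < word_code w.
Proof. induction w as [|b w IH]; simpl; [lia|destruct b; lia]. Qed.

Lemma word_code_bound w : word_code w < 2 ^ S (length w).
Proof. induction w as [|b w IH]; simpl in *; [lia|destruct b; lia]. Qed.

Lemma word_code_inj w w' : word_code w = word_code w' -> w = w'.
Proof.
  revert w'; induction w as [|b w IH]; intros [|b' w'] H; simpl in H; auto.
  - pose proof (word_code_length w'); destruct b'; lia.
  - pose proof (word_code_length w); destruct b; lia.
  - destruct b, b'; try lia; f_equal; apply IH; lia.
Qed.

(* start of the block of [w] in the universal sequence; as [length w < word_code w], the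
   exponential spacing keeps the blocks disjoint *)
Definition word_pos (w : list bool) : nat := 4 ^ word_code w.

Lemma word_pos_inj w w' i i' : i < length w -> i' < length w' ->
  word_pos w + i = word_pos w' + i' -> w = w' /\ i = i'.
Proof.
  intros Hi Hi' E. unfold word_pos in E.
  pose proof (word_code_length w). pose proof (word_code_length w').
  assert (Hgt : forall c, c < 4 ^ c) by (intros; apply Nat.pow_gt_lin_r; lia).
  assert (Hc : word_code w = word_code w').
  { destruct (Nat.lt_total (word_code w) (word_code w')) as [h|[h|h]]; auto; exfalso.
    - pose proof (Hgt (word_code w)). pose proof (Nat.pow_le_mono_r 4 _ _ ltac:(lia) h). simpl in *. lia.
    - pose proof (Hgt (word_code w')). pose proof (Nat.pow_le_mono_r 4 _ _ ltac:(lia) h). simpl in *. lia. }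
  apply word_code_inj in Hc. subst. split; auto. lia.
Qed.

Lemma word_pos_bound w : word_pos w <= 4 ^ (2 ^ S (length w)).
Proof. unfold word_pos. apply Nat.pow_le_mono_r; [lia|]. pose proof (word_code_bound w); lia. Qed.

Definition univ_seq : zseq :=
  fun z => exists w i, i < length w /\ z = Z.of_nat (word_pos w + i) /\ nth i w false = true.

Lemma univ_seq_at w i : i < length w -> (univ_seq (Z.of_nat (word_pos w + i)) <-> nth i w false = true).
Proof.
  intros Hi. split.
  - intros [w' [i' [h1 [h2 h3]]]]. apply Nat2Z.inj in h2.
    destruct (word_pos_inj w w' i i' Hi h1 h2) as [-> ->]. auto.
  - intros H. exists w, i. auto.
Qed.

Lemma univ_seq_universal : universal univ_seq.
Proof.
  intros w. exists (Z.of_nat (word_pos w)). intros i Hi.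
  rewrite <- Nat2Z.inj_add. apply univ_seq_at; auto.
Qed.

Definition to_bool (P : Prop) : bool := if excluded_middle_informative P then true else false.

Lemma to_bool_true P : to_bool P = true <-> P.
Proof. unfold to_bool; destruct (excluded_middle_informative P); split; auto; discriminate. Qed.

Lemma nth_map_seq (f : nat -> bool) n t : t < n -> nth t (map f (seq 0 n)) false = f t.
Proof.
  intros Ht. rewrite (nth_indep _ false (f 0)) by (rewrite length_map, length_seq; auto).
  rewrite map_nth, seq_nth; auto.
Qed.

Definition prefix_word (N : nat) (s : nat -> Prop) : list bool := map (fun t => to_bool (s t)) (seq 0 N).

Lemma prefix_word_length N s : length (prefix_word N s) = N.
Proof. unfold prefix_word. rewrite length_map, length_seq. auto. Qed.

Lemma prefix_word_nth N s t : t < N -> (nth t (prefix_word N s) false = true <-> s t).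
Proof. intros Ht. unfold prefix_word. rewrite nth_map_seq by auto. apply to_bool_true. Qed.

(** * Dual shattering *)

(* the parameters [a i] of IP, indexed by codes of words of length [N], become the
   parameters [d s]; the witnesses [b] for the sets of codes with [t]-th letter 1
   become the parameters [c t] *)
Lemma dual_shattering {L : signature} (M : structure L) k m (φ : formula L) :
  (forall n, exists a : nat -> (Fin.t k -> M), forall J : nat -> Prop, exists b : Fin.t m -> M,
      forall i, i < n -> (sat2 φ (a i) b <-> J i)) ->
  forall N, exists (c : nat -> (Fin.t m -> M)) (d : (nat -> Prop) -> (Fin.t k -> M)),
    forall s t, t < N -> (sat2 φ (d s) (c t) <-> s t).
Proof.
  intros HIP N. destruct (HIP (2 ^ S N)) as [a Ha].
  pose (J := fun t i => exists w, length w = N /\ word_code w = i /\ nth t w false = true).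
  destruct (choice_fun (fun _ => witness M)
              (fun t (b : Fin.t m -> M) => forall i, i < 2 ^ S N -> (sat2 φ (a i) b <-> J t i))) as [c Hc].
  exists c, (fun s => a (word_code (prefix_word N s))). intros s t Ht.
  rewrite Hc by (auto; pose proof (word_code_bound (prefix_word N s)); rewrite prefix_word_length in *; auto).
  unfold J. split.
  - intros [w [h1 [h2 h3]]]. apply word_code_inj in h2. rewrite h2 in h3. apply (prefix_word_nth N s t Ht), h3.
  - intros Hs. exists (prefix_word N s). split; [apply prefix_word_length|]. split; auto.
    apply prefix_word_nth; auto.
Qed.

(* an ultrapower over [nat], by an ultrafilter containing the final segments,
   glues the finite dual shatterings *)
Lemma infinite_dual_shattering {L : signature} (M : structure L) k m (φ : formula L) :
  (forall N, exists (c : nat -> (Fin.t m -> M)) (d : (nat -> Prop) -> (Fin.t k -> M)),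
    forall s t, t < N -> (sat2 φ (d s) (c t) <-> s t)) ->
  exists (P : structure L) (f : M -> P), elementary f /\
    exists (c : nat -> (Fin.t m -> P)) (d : (nat -> Prop) -> (Fin.t k -> P)),
      forall s t, sat2 φ (d s) (c t) <-> s t.
Proof.
  intros HN.
  destruct (ultrafilter_of_fip (fun X : nat -> Prop => exists t, X = fun N => t < N)) as [U0 [HU0 HUX]].
  { intros l Hl. induction l as [|X l IH].
    - exists 0; intros X [].
    - destruct IH as [N HNl]; [intros; apply Hl; right; auto|].
      destruct (Hl X (or_introl eq_refl)) as [t ->].
      exists (Nat.max N (S t)). intros Y [<-|HY]; [lia|].
      specialize (HNl Y HY). destruct (Hl Y (or_intror HY)) as [t' ->]. lia. }
  destruct (choice_fun (fun _ _ => witness M, fun _ _ => witness M)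
              (fun N (cd : (nat -> Fin.t m -> M) * ((nat -> Prop) -> Fin.t k -> M)) =>
                 forall s t, t < N -> (sat2 φ (snd cd s) (fst cd t) <-> s t))) as [cd Hcd].
  exists (ultrapower M U0 HU0), (diag M U0 HU0). split; [apply diag_elementary|].
  exists (fun t j => ucls M U0 HU0 (fun N => fst (cd N) t j)),
    (fun s j => ucls M U0 HU0 (fun N => snd (cd N) s j)).
  intros s t. rewrite ultrapower_sat2.
  apply (uf_iff_on HU0 (fun N => t < N)); [apply HUX; eauto|]. intros N HtN.
  apply Hcd; auto. destruct (HN N) as [c [d H]]. exists (c, d). exact H.
Qed.

(** * A shift-invariant sequence of parameters *)

Definition list_max {X : Type} (f : X -> nat) (l : list X) : nat :=
  fold_right (fun x a => Nat.max (f x) a) 0 l.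

Lemma list_max_ge {X : Type} (f : X -> nat) l x : In x l -> f x <= list_max f l.
Proof. induction l as [|y l IH]; simpl; [tauto|]. intros [<-|H]; [lia|]. specialize (IH H); lia. Qed.

Lemma extend_on_list {X Y : Type} (l : list X) (val sval : X -> Y) :
  (forall a a', In a l -> In a' l -> val a = val a' -> sval a = sval a') ->
  exists e : Y -> Y, forall a, In a l -> e (val a) = sval a.
Proof.
  intros Hresp.
  exists (fun q => match excluded_middle_informative (exists a, In a l /\ val a = q) with
           | left h => sval (proj1_sig (constructive_indefinite_description _ h))
           | right _ => q end).
  intros a Ha. destruct (excluded_middle_informative _) as [h|h]; [|exfalso; eauto].
  destruct (proj2_sig (constructive_indefinite_description _ h)) as [h1 h2]. apply Hresp; auto.
Qed.

(* From an infinite dual shattering [φ(d s, c t) <-> s t] in [P] we build a sequence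
   [bseq z] (z ∈ ℤ), still dually shattered by [φ], over which the shift
   [bseq z ↦ bseq (z - 1)] is finitely elementary.  A condition [(W, C)] is a property of
   a ℤ-sequence of parameters that only reads the window [[-W, W]], possibly through
   auxiliary elements [γ].  [em_model] is the ultrapower of [P] over finite sets [Φ] of
   conditions, and the [Φ]-th coordinate of [bseq] runs along a subsequence of [c] that
   Ramsey's theorem makes homogeneous for the conditions in [Φ]: their truth does not
   change under the shift. *)
Section ShiftInvariant.
Context {L : signature} (P : structure L) (k m : nat) (φ : formula L)
  (c : nat -> (Fin.t m -> P)) (d : (nat -> Prop) -> (Fin.t k -> P))
  (Hsh : forall s t, sat2 φ (d s) (c t) <-> s t).

Definition cond : Type@{structure.u0} :=
  (nat * ((nat -> nat -> P) -> (Z -> Fin.t m -> P) -> Prop))%type.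

Definition clamp (W : nat) (z : Z) : Z := Z.max (- Z.of_nat W) (Z.min (Z.of_nat W) z).

Definition cond_sat (cd : cond) (β : Z -> Fin.t m -> P) : Prop :=
  exists γ, snd cd γ (fun z => β (clamp (fst cd) z)).

Definition offset (Φ : list cond) : nat := S (list_max fst Φ).

Definition cond_col (cd : cond) (K : nat) (g : nat -> nat) : Prop :=
  cond_sat cd (fun z => c (g (Z.to_nat (z + Z.of_nat K - 1)))).

Lemma cond_col_depends_below cd K : depends_below (fst cd + K + 1) (cond_col cd K).
Proof.
  intros g g' Hgg. unfold cond_col, cond_sat.
  replace (fun z => c (g (Z.to_nat (clamp (fst cd) z + Z.of_nat K - 1)))) with
          (fun z => c (g' (Z.to_nat (clamp (fst cd) z + Z.of_nat K - 1)))); [tauto|].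
  apply functional_extensionality; intros z. rewrite Hgg; auto. unfold clamp. lia.
Qed.

Lemma hom_seq_ex (Φ : list cond) :
  exists hh, strict_incr hh /\ forall cd, In cd Φ -> forall g, strict_incr g ->
   (cond_col cd (offset Φ) (fun i => hh (g i)) <-> cond_col cd (offset Φ) hh).
Proof.
  apply (ramsey_list Φ (fun cd => fst cd + offset Φ + 1) (fun cd => cond_col cd (offset Φ))).
  intros cd; apply cond_col_depends_below.
Qed.

Definition hom_seq (Φ : list cond) : nat -> nat :=
  proj1_sig (constructive_indefinite_description _ (hom_seq_ex Φ)).
Lemma hom_seq_incr Φ : strict_incr (hom_seq Φ).
Proof. apply (proj2_sig (constructive_indefinite_description _ (hom_seq_ex Φ))). Qed.
Lemma hom_seq_hom Φ cd g : In cd Φ -> strict_incr g ->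
  (cond_col cd (offset Φ) (fun i => hom_seq Φ (g i)) <-> cond_col cd (offset Φ) (hom_seq Φ)).
Proof. intros; apply (proj2_sig (constructive_indefinite_description _ (hom_seq_ex Φ))); auto. Qed.

(* for [z ≥ - offset Φ] this is the [z + offset Φ]-th term of the homogeneous subsequence *)
Definition hom_b (Φ : list cond) (z : Z) : Fin.t m -> P :=
  c (hom_seq Φ (Z.to_nat (z + Z.of_nat (offset Φ)))).

Lemma hom_b_shift Φ cd : In cd Φ -> cond_sat cd (hom_b Φ) -> cond_sat cd (fun z => hom_b Φ (z - 1)).
Proof.
  intros Hc H.
  assert (HW : fst cd <= list_max fst Φ) by (apply list_max_ge; auto).
  assert (E1 : cond_sat cd (hom_b Φ) <-> cond_col cd (offset Φ) (fun i => hom_seq Φ (S i))).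
  { unfold cond_col, cond_sat. replace (fun z => hom_b Φ (clamp (fst cd) z)) with
      (fun z => c (hom_seq Φ (S (Z.to_nat (clamp (fst cd) z + Z.of_nat (offset Φ) - 1))))); [tauto|].
    apply functional_extensionality; intros z. unfold hom_b. do 2 f_equal. unfold offset, clamp in *. lia. }
  assert (E2 : cond_sat cd (fun z => hom_b Φ (z - 1)) <-> cond_col cd (offset Φ) (hom_seq Φ)).
  { unfold cond_col, cond_sat. replace (fun z => hom_b Φ (clamp (fst cd) z - 1)) with
      (fun z => c (hom_seq Φ (Z.to_nat (clamp (fst cd) z + Z.of_nat (offset Φ) - 1)))); [tauto|].
    apply functional_extensionality; intros z. unfold hom_b. do 3 f_equal. lia. }
  rewrite E2, <- (hom_seq_hom Φ cd S Hc strict_incr_S). apply E1, H.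
Qed.

Definition V : (list cond -> Prop) -> Prop :=
  proj1_sig (constructive_indefinite_description _ (ultrafilter_on_lists cond)).
Lemma HV : ultrafilter V.
Proof. apply (proj2_sig (constructive_indefinite_description _ (ultrafilter_on_lists cond))). Qed.
Lemma V_in cd : V (fun Φ => In cd Φ).
Proof. apply (proj2_sig (constructive_indefinite_description _ (ultrafilter_on_lists cond))). Qed.

Lemma cond_shift_ae cd :
  V (fun Φ => cond_sat cd (hom_b Φ)) -> V (fun Φ => cond_sat cd (fun z => hom_b Φ (z - 1))).
Proof.
  intros H. eapply (uf_sub _ HV); [|exact (uf_meet _ HV _ _ H (V_in cd))].
  intros Φ [h1 h2]. apply hom_b_shift; auto.
Qed.

Definition em_model : structure L := ultrapower P V HV.
Definition vcls := ucls P V HV.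
Definition vrep := urep P V HV.

Definition bseq (z : Z) : Fin.t m -> em_model := fun j => vcls (fun Φ => hom_b Φ z j).

(* the set of indices of [c] that [s] selects through [hom_b Φ] *)
Definition hom_set (s : Z -> Prop) (Φ : list cond) (t : nat) : Prop :=
  exists z, (0 <= z + Z.of_nat (offset Φ))%Z /\ t = hom_seq Φ (Z.to_nat (z + Z.of_nat (offset Φ))) /\ s z.

Definition aseq (s : Z -> Prop) : Fin.t k -> em_model := fun j => vcls (fun Φ => d (hom_set s Φ) j).

Lemma em_model_shatter s z : sat2 φ (aseq s) (bseq z) <-> s z.
Proof.
  unfold aseq, bseq, vcls, em_model.
  rewrite (ultrapower_sat2 P V HV k m φ (fun j Φ => d (hom_set s Φ) j) (fun j Φ => hom_b Φ z j)).
  apply (uf_iff_on HV (fun Φ => In (Z.to_nat (Z.abs z), fun _ _ => True) Φ)); [apply V_in|]. intros Φ HΦ.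
  apply (list_max_ge fst) in HΦ. simpl in HΦ.
  transitivity (hom_set s Φ (hom_seq Φ (Z.to_nat (z + Z.of_nat (offset Φ))))); [exact (Hsh _ _)|].
  unfold hom_set. split.
  - intros [z' [h1 [h2 h3]]]. apply strict_incr_inj in h2; [|apply hom_seq_incr].
    replace z with z'; auto. unfold offset in *. lia.
  - intros Hs. exists z. split; [unfold offset; lia|]. split; auto.
Qed.

(* A finite set of facts about [em_model] (formulas [fst p] true at valuations [snd p])
   together with finitely many parameters [bseq z j] is encoded as one condition: the
   auxiliary elements [γ i x] stand for the values of the variables [x] of the [i]-th fact,
   and the condition records the facts and all equalities between the encoded elements. *)
Definition atom : Type@{structure.u0} := ((nat * nat) + (Z * Fin.t m))%type.

Section Facts.
Variables (ds : list (formula L * (nat -> em_model))) (ss : list (Z * Fin.t m)).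

Definition fact_formula (i : nat) : formula L := fst (nth i ds (f_false L, fun _ => witness em_model)).
Definition fact_val (i : nat) : nat -> em_model := snd (nth i ds (f_false L, fun _ => witness em_model)).
Definition facts_bound : nat := max_below (length ds) (fun i => formula_bound (fact_formula i)).
Definition shifts_width : nat := list_max (fun zj => Z.to_nat (Z.abs (fst zj))) ss.

Definition atoms : list atom := map inl (list_prod (seq 0 (length ds)) (seq 0 facts_bound)) ++ map inr ss.

Definition atom_val (a : atom) : em_model :=
  match a with inl (i, x) => fact_val i x | inr (z, j) => bseq z j end.

Definition atom_ev (γ : nat -> nat -> P) (β : Z -> Fin.t m -> P) (a : atom) : P :=
  match a with inl (i, x) => γ i x | inr (z, j) => β z j end.

Definition facts_cond : cond :=
  (shifts_width, fun γ β =>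
     (forall i, i < length ds -> sat (γ i) (fact_formula i)) /\
     (forall a a', In a atoms -> In a' atoms -> atom_val a = atom_val a' ->
                   atom_ev γ β a = atom_ev γ β a')).

Lemma atoms_inr z j : In (inr (z, j)) atoms -> In (z, j) ss /\ (Z.abs z <= Z.of_nat shifts_width)%Z.
Proof.
  intros H. apply in_app_or in H. destruct H as [H|H]; apply in_map_iff in H;
    destruct H as [y [h1 h2]]; [discriminate|]. injection h1; intros; subst. split; auto.
  pose proof (list_max_ge (fun zj => Z.to_nat (Z.abs (fst zj))) ss _ h2). unfold shifts_width. simpl in *. lia.
Qed.

Lemma facts_cond_ae : (forall p, In p ds -> sat (snd p) (fst p)) ->
  V (fun Φ => cond_sat facts_cond (hom_b Φ)).
Proof.
  intros Hds. set (γΦ := fun Φ i x => vrep (fact_val i x) Φ).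
  assert (Hfacts : V (fun Φ => forall i, i < length ds -> sat (γΦ Φ i) (fact_formula i))).
  { apply (uf_forall_lt HV). intros i Hi.
    assert (Hs : sat (fact_val i) (fact_formula i)) by (apply Hds, nth_In; auto).
    rewrite (los_ext P V HV _ (fact_val i) (fun x => vrep (fact_val i x))) in Hs; auto.
    intros x. symmetry. apply (ucls_urep P V HV). }
  assert (Hreps : V (fun Φ => forall a, In a atoms ->
            atom_ev (γΦ Φ) (fun z => hom_b Φ (clamp shifts_width z)) a = vrep (atom_val a) Φ)).
  { apply (uf_forall_in HV). intros [[i x]|[z j]] Ha; simpl.
    - apply (uf_all HV). reflexivity.
    - apply atoms_inr in Ha. replace (clamp shifts_width z) with z by (unfold clamp; lia).
      eapply (uf_sub _ HV); [|exact (urep_ucls P V HV (fun Φ => hom_b Φ z j))].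
      intros Φ h. symmetry. exact h. }
  eapply (uf_sub _ HV); [|exact (uf_meet _ HV _ _ Hfacts Hreps)].
  intros Φ [h1 h2]. exists (γΦ Φ). simpl. split; auto.
  intros a a' Ha Ha' Hv. rewrite (h2 a Ha), (h2 a' Ha'), Hv. reflexivity.
Qed.

Lemma facts_cond_shifted_realized (γ' : list cond -> nat -> nat -> P) :
  V (fun Φ => snd facts_cond (γ' Φ) (fun z => hom_b Φ (clamp shifts_width z - 1))) ->
  exists e : em_model -> em_model, (forall p, In p ds -> sat (fun x => e (snd p x)) (fst p)) /\
     (forall zj, In zj ss -> e (bseq (fst zj) (snd zj)) = bseq (fst zj - 1) (snd zj)).
Proof.
  intros HG.
  set (sval := fun a : atom => match a with
                 | inl (i, x) => vcls (fun Φ => γ' Φ i x) | inr (z, j) => bseq (z - 1) j end).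
  assert (Hsval : forall a, In a atoms ->
            V (fun Φ => vrep (sval a) Φ = atom_ev (γ' Φ) (fun z => hom_b Φ (clamp shifts_width z - 1)) a)).
  { intros [[i x]|[z j]] Ha; simpl.
    - apply (urep_ucls P V HV (fun Φ => γ' Φ i x)).
    - apply atoms_inr in Ha. replace (clamp shifts_width z) with z by (unfold clamp; lia).
      apply (urep_ucls P V HV (fun Φ => hom_b Φ (z - 1) j)). }
  destruct (extend_on_list atoms atom_val sval) as [e He].
  { intros a a' Ha Ha' Hv.
    rewrite <- (ucls_urep P V HV (sval a)), <- (ucls_urep P V HV (sval a')). apply (ucls_eq P V HV).
    eapply (uf_sub _ HV); [|exact (uf_meet _ HV _ _ HG (uf_meet _ HV _ _ (Hsval a Ha) (Hsval a' Ha')))].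
    intros Φ [h1 [h2 h3]]. unfold vrep in h2, h3. rewrite h2, h3. apply (proj2 h1); auto. }
  exists e. split.
  - intros p Hp. destruct (In_nth ds p (f_false L, fun _ => witness em_model) Hp) as [i [Hi <-]].
    change (@sat L em_model (fun x => e (fact_val i x)) (fact_formula i)).
    assert (HBi : formula_bound (fact_formula i) <= facts_bound)
      by (apply (max_below_ge _ (fun i => formula_bound (fact_formula i))); auto).
    rewrite (sat_bound_ext em_model _ _ (fun x => vcls (fun Φ => γ' Φ i x))).
    2:{ intros x Hx. change (e (atom_val (inl (i, x))) = sval (inl (i, x))). apply He.
        apply in_or_app. left. apply in_map, in_prod; apply in_seq; lia. }
    unfold vcls. rewrite (los P V HV _ (fun x Φ => γ' Φ i x)).
    eapply (uf_sub _ HV); [|exact HG]. intros Φ [h1 _]. apply h1; auto.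
  - intros [z j] Hzj. change (e (atom_val (inr (z, j))) = sval (inr (z, j))).
    apply He, in_or_app. right. apply in_map; auto.
Qed.

End Facts.

Lemma em_shift_finitely_realized (ds : list (formula L * (nat -> em_model))) (ss : list (Z * Fin.t m)) :
  (forall p, In p ds -> sat (snd p) (fst p)) ->
  exists e : em_model -> em_model, (forall p, In p ds -> sat (fun x => e (snd p x)) (fst p)) /\
     (forall zj, In zj ss -> e (bseq (fst zj) (snd zj)) = bseq (fst zj - 1) (snd zj)).
Proof.
  intros Hds.
  destruct (choice_fun (fun _ _ => witness P)
              (fun Φ γ => snd (facts_cond ds ss) γ (fun z => hom_b Φ (clamp (shifts_width ss) z - 1))))
    as [γ' Hγ'].
  apply (facts_cond_shifted_realized ds ss γ').
  eapply (uf_sub _ HV); [|exact (cond_shift_ae _ (facts_cond_ae ds ss Hds))]. intros Φ h. exact (Hγ' Φ h).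
Qed.

End ShiftInvariant.

(** * Realizing the shift by an automorphism *)

Lemma automorphism_extending_shift {L : signature} (N0 : structure L) {I : Type@{structure.u0}}
  (U : (I -> Prop) -> Prop) (HU : ultrafilter U) (h : N0 -> I -> N0)
  (Eh : forall φ (v : nat -> N0), sat v φ <-> U (fun i => sat (fun x => h (v x) i) φ))
  {X : Type} (β : Z -> X -> N0) :
  (forall z j, U (fun i => h (β z j) i = β (z - 1)%Z j)) ->
  exists (F : structure L) (ι : N0 -> F) (σ : automorphism F),
    elementary ι /\ forall z j, σ (ι (β z j)) = ι (β (z - 1)%Z j).
Proof.
  intros Hβ.
  set (Hsh := iu_shift_elementary N0 U HU h Eh).
  exists (direct_limit _ _ Hsh), (fun x => lim_in _ _ Hsh (iu_in N0 U HU x)), (lim_aut _ _ Hsh). split.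
  - exact (elementary_comp _ _ _ _ _ (iu_in_elementary N0 U HU) (lim_in_elementary _ _ Hsh)).
  - intros z j. rewrite lim_aut_in. f_equal. apply iu_shift_in, Hβ.
Qed.

Lemma list_cover {C A B : Type} (SA : A -> Prop) (PA : A -> C -> Prop) (PB : B -> C -> Prop) (l : list C) :
  (forall c, In c l -> (exists a, SA a /\ PA a c) \/ (exists b, PB b c)) ->
  exists la lb, (forall a, In a la -> SA a) /\
    forall c, In c l -> (exists a, In a la /\ PA a c) \/ (exists b, In b lb /\ PB b c).
Proof.
  induction l as [|c l IH]; intros Hl.
  - exists nil, nil. split; [intros _ []|intros _ []].
  - destruct IH as [la [lb [Hla Hl']]]; [intros; apply Hl; right; auto|].
    destruct (Hl c (or_introl eq_refl)) as [[a [Ha Hac]]|[b Hbc]].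
    + exists (a :: la), lb. split; [intros a' [<-|Ha']; auto|].
      intros c' [<-|Hc']; [left; exists a; split; [left|]; auto|].
      destruct (Hl' c' Hc') as [[a' [h1 h2]]|[b' [h1 h2]]];
        [left; exists a'; split; [right|]; auto|right; eauto].
    + exists la, (b :: lb). split; auto.
      intros c' [<-|Hc']; [right; exists b; split; [left|]; auto|].
      destruct (Hl' c' Hc') as [[a' [h1 h2]]|[b' [h1 h2]]];
        [left; eauto|right; exists b'; split; [right|]; auto].
Qed.

Lemma shift_in_ultrapower {L : signature} (N0 : structure L) {X : Type@{structure.u0}} (β : Z -> X -> N0) :
  (forall (ds : list (formula L * (nat -> N0))) (ss : list (Z * X)),
     (forall p, In p ds -> sat (snd p) (fst p)) ->
     exists e : N0 -> N0, (forall p, In p ds -> sat (fun x => e (snd p x)) (fst p)) /\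
       (forall zj, In zj ss -> e (β (fst zj) (snd zj)) = β (fst zj - 1)%Z (snd zj))) ->
  exists (I : Type@{structure.u0}) (U : (I -> Prop) -> Prop), ultrafilter U /\
    exists h : N0 -> I -> N0,
      (forall φ (v : nat -> N0), sat v φ <-> U (fun i => sat (fun x => h (v x) i) φ)) /\
      (forall z j, U (fun i => h (β z j) i = β (z - 1)%Z j)).
Proof.
  intros Hfin.
  set (C := fun cd : (N0 -> N0) -> Prop =>
    (exists ψ (v : nat -> N0), sat v ψ /\ cd = fun e => sat (fun x => e (v x)) ψ) \/
    (exists z j, cd = fun e => e (β z j) = β (z - 1)%Z j)).
  destruct (ultrapower_realize N0 N0 C) as [I [U [HU [h Hh]]]].
  - intros l Hl.
    destruct (list_cover (fun p => sat (snd p) (fst p))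
                (fun p cd => cd = fun e => sat (fun x => e (snd p x)) (fst p))
                (fun zj cd => cd = fun e => e (β (fst zj) (snd zj)) = β (fst zj - 1)%Z (snd zj)) l)
      as [ds [ss [Hds Hl']]].
    { intros cd Hc. destruct (Hl cd Hc) as [[ψ [v [Hs ->]]]|[z [j ->]]];
        [left; exists (ψ, v)|right; exists (z, j)]; auto. }
    destruct (Hfin ds ss Hds) as [e [He1 He2]].
    exists e. intros cd Hc. destruct (Hl' cd Hc) as [[p [Hp ->]]|[zj [Hzj ->]]]; auto.
  - exists I, U. split; [exact HU|]. exists h. split.
    + intros ψ v. split; intros H.
      * apply (Hh (fun e => sat (fun x => e (v x)) ψ)). left. exists ψ, v. auto.
      * apply NNPP. intros Hn.
        assert (Hn' : U (fun i => sat (fun x => h (v x) i) (f_not ψ)))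
          by (apply (Hh (fun e => sat (fun x => e (v x)) (f_not ψ))); left; exists (f_not ψ), v; auto).
        apply (uf_not_empty _ HU). eapply (uf_sub _ HU); [|exact (uf_meet _ HU _ _ H Hn')].
        intros i [h1 h2]. apply h2; auto.
    + intros z j. apply (Hh (fun e => e (β z j) = β (z - 1)%Z j)). right. eauto.
Qed.

Section Equivalences.
Context {L : signature} (T : theory L) (k m : nat) (φ : formula L) (Hin : formula_in k m φ).

Definition xi_full : Prop :=
  exists (M : structure L) (b : Fin.t m -> M) (σ : automorphism M),
    is_model T M /\ forall s : zseq, in_xi_image σ (@instance L M k m φ b) s.

Definition xi_dense : Prop :=
  exists (M : structure L) (b : Fin.t m -> M) (σ : automorphism M),
    is_model T M /\ dense (in_xi_image σ (@instance L M k m φ b)).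

Definition xi_universal : Prop :=
  exists (M : structure L) (b : Fin.t m -> M) (σ : automorphism M),
    is_model T M /\ exists s, in_xi_image σ (@instance L M k m φ b) s /\ universal s.

Definition xi_all_blocks : Prop :=
  exists (M : structure L) (σ : automorphism M), is_model T M /\
    forall n : nat, exists bn : Fin.t m -> M,
      forall w : list bool, length w = n ->
        exists s, in_xi_image σ (@instance L M k m φ bn) s /\ appears_in w s.

Definition rho_dense : Prop := exists M : structure L, is_model T M /\ dense (@rho L M k m φ).

Lemma ip_xi_full : (forall ψ, T ψ -> sentence ψ) -> has_IP T k m φ -> xi_full.
Proof.
  intros Hsent [M [HM HIP]].
  destruct (infinite_dual_shattering M k m φ (dual_shattering M k m φ HIP))
    as [P [fP [HfP [c [d Hsh]]]]].
  set (N0 := em_model P m).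
  destruct (shift_in_ultrapower N0 (bseq P m c) (em_shift_finitely_realized P m c))
    as [I [U [HU [h [Eh Hβ]]]]].
  destruct (automorphism_extending_shift N0 U HU h Eh (bseq P m c) Hβ) as [F [ι [σ [Hι Hσ]]]].
  assert (Hpow : forall z n j, aut_pow σ n (ι (bseq P m c z j)) = ι (bseq P m c (z - n)%Z j))
    by exact (aut_pow_shift_orbit σ (fun z j => ι (bseq P m c z j)) Hσ).
  exists F, (fun j => ι (bseq P m c 0%Z j)), σ. split.
  - apply (elementary_is_model T M F (fun x => ι (diag P (V P m) (HV P m) (fP x)))); auto.
    exact (elementary_comp _ _ _ _ _ (elementary_comp _ _ _ _ _ HfP (diag_elementary P (V P m) (HV P m))) Hι).
  - intros s. exists (fun j => ι (aseq P k m c d s j)). intros n. unfold xi, instance, aut_pow_tuple.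
    rewrite <- (elementary_sat2 _ _ _ k m φ _ _ (aut_pow_elementary σ (- n)) Hin).
    replace (fun j => aut_pow σ (- n) (aut_pow σ n (ι (aseq P k m c d s j)))) with
      (fun j => ι (aseq P k m c d s j))
      by (apply functional_extensionality; intros j; symmetry; apply aut_pow_oppK).
    replace (fun j => aut_pow σ (- n) (ι (bseq P m c 0%Z j))) with (fun j => ι (bseq P m c n j))
      by (apply functional_extensionality; intros j; rewrite Hpow; do 3 f_equal; lia).
    rewrite (elementary_sat2 _ _ ι k m φ _ _ Hι Hin). apply em_model_shatter, Hsh.
Qed.

Lemma xi_full_dense : xi_full -> xi_dense.
Proof.
  intros [M [b [σ [HM Hall]]]]. exists M, b, σ. split; auto.
  intros F v. exists v. split; [auto|tauto].
Qed.

Lemma xi_full_universal : xi_full -> xi_universal.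
Proof.
  intros [M [b [σ [HM Hall]]]]. exists M, b, σ. split; auto.
  exists univ_seq. split; auto. apply univ_seq_universal.
Qed.

Lemma xi_universal_all_blocks : xi_universal -> xi_all_blocks.
Proof.
  intros [M [b [σ [HM [s [Hs Hu]]]]]]. exists M, σ. split; auto.
  intros n. exists b. intros w _. exists s. split; auto.
Qed.

Lemma xi_dense_rho_dense : xi_dense -> rho_dense.
Proof.
  intros [M [b [σ [HM Hd]]]]. exists M. split; auto.
  intros F v. destruct (Hd F v) as [s [Hs Hsv]]. exists s. split; auto. exists b, σ. auto.
Qed.

Lemma in_xi_image_shift (M : structure L) (σ : automorphism M) (U : (Fin.t k -> M) -> Prop) s t0 :
  in_xi_image σ U s -> in_xi_image σ U (fun t => s (t + t0)%Z).
Proof.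
  intros [a Ha]. exists (fun j => aut_pow σ t0 (a j)). intros t. unfold xi, aut_pow_tuple in *.
  rewrite <- (Ha (t + t0)%Z).
  replace (fun j => aut_pow σ t (aut_pow σ t0 (a j))) with (fun j => aut_pow σ (t + t0) (a j)); [tauto|].
  apply functional_extensionality; intros j; rewrite aut_pow_add; auto.
Qed.

(* to match [v] on [F ⊆ [-N, N]], shift an occurrence of the word [v(-N) ... v(N)] *)
Lemma xi_all_blocks_rho_dense : xi_all_blocks -> rho_dense.
Proof.
  intros [M [σ [HM H3]]]. exists M. split; auto. intros F v.
  set (N := list_max (fun z => Z.to_nat (Z.abs z)) F).
  assert (HN : forall z, In z F -> (Z.abs z <= Z.of_nat N)%Z)
    by (intros z Hz; pose proof (list_max_ge (fun z => Z.to_nat (Z.abs z)) F z Hz); cbv beta in *; lia).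
  set (w := map (fun i => to_bool (v (Z.of_nat i - Z.of_nat N)%Z)) (seq 0 (S (2 * N)))).
  assert (Hw : length w = S (2 * N)) by (unfold w; rewrite length_map, length_seq; auto).
  destruct (H3 (S (2 * N))) as [bn Hbn]. destruct (Hbn w Hw) as [s [Hs [z0 Hz0]]].
  exists (fun t => s (t + (z0 + Z.of_nat N))%Z). split.
  - exists bn, σ. apply in_xi_image_shift; auto.
  - intros z Hz. specialize (HN z Hz).
    assert (Hi : Z.to_nat (z + Z.of_nat N) < length w) by (rewrite Hw; lia).
    specialize (Hz0 _ Hi).
    replace (z + (z0 + Z.of_nat N))%Z with (z0 + Z.of_nat (Z.to_nat (z + Z.of_nat N)))%Z by lia.
    rewrite Hz0. unfold w. rewrite nth_map_seq, to_bool_true by (rewrite Hw in Hi; auto).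
    replace (Z.of_nat (Z.to_nat (z + Z.of_nat N)) - Z.of_nat N)%Z with z by lia. tauto.
Qed.

(* a sequence of [ρ_φ(M)] matching the universal sequence far enough contains, at the
   block of the word of [J], a pattern realized along an orbit of [σ] *)
Lemma rho_dense_ip : rho_dense -> has_IP T k m φ.
Proof.
  intros [M [HM Hd]]. exists M. split; auto. intros n.
  destruct (Hd (map Z.of_nat (seq 0 (4 ^ (2 ^ S n) + n))) univ_seq) as [s [[b [σ [a Ha]]] Hag]].
  exists (fun i j => aut_pow σ (Z.of_nat i) (a j)). intros J.
  set (z0 := word_pos (prefix_word n J)).
  exists (fun j => aut_pow σ (- Z.of_nat z0) (b j)). intros i Hi.
  rewrite <- (elementary_sat2 M M (aut_pow σ (Z.of_nat z0)) k m φ _ _ (aut_pow_elementary σ _) Hin).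
  replace (fun j => aut_pow σ (Z.of_nat z0) (aut_pow σ (Z.of_nat i) (a j))) with
      (fun j => aut_pow σ (Z.of_nat (z0 + i)) (a j))
    by (apply functional_extensionality; intros j; rewrite <- aut_pow_add; f_equal; lia).
  replace (fun j => aut_pow σ (Z.of_nat z0) (aut_pow σ (- Z.of_nat z0) (b j))) with b
    by (apply functional_extensionality; intros j;
        rewrite <- (Z.opp_involutive (Z.of_nat z0)) at 1; rewrite aut_pow_oppK; auto).
  change (xi σ (@instance L M k m φ b) a (Z.of_nat (z0 + i)) <-> J i).
  rewrite Ha, Hag.
  - unfold z0. rewrite univ_seq_at by (rewrite prefix_word_length; auto). apply prefix_word_nth; auto.
  - apply in_map, in_seq. pose proof (word_pos_bound (prefix_word n J)) as Hb.
    rewrite prefix_word_length in Hb. fold z0 in Hb. lia.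
Qed.

End Equivalences.

Theorem theorem4p8 (L : signature) (T : theory L) (k m : nat) (φ : formula L) :
  complete_theory T -> formula_in k m φ ->
  (* (1) <-> (2) *)
  (has_IP T k m φ <->
     exists (M : structure L) (b : Fin.t m -> M) (σ : automorphism M),
       is_model T M /\ dense (in_xi_image σ (@instance L M k m φ b))) /\
  (* (1) <-> (3) *)
  (has_IP T k m φ <->
     exists (M : structure L) (σ : automorphism M), is_model T M /\
       forall n : nat, exists bn : Fin.t m -> M,
         forall w : list bool, length w = n ->
           exists s, in_xi_image σ (@instance L M k m φ bn) s /\ appears_in w s) /\
  (* (1) <-> (4) *)
  (has_IP T k m φ <->
     exists (M : structure L) (b : Fin.t m -> M) (σ : automorphism M),
       is_model T M /\
       exists s, in_xi_image σ (@instance L M k m φ b) s /\ universal s) /\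
  (* (1) <-> (5) *)
  (has_IP T k m φ <->
     exists (M : structure L) (b : Fin.t m -> M) (σ : automorphism M),
       is_model T M /\ forall s : zseq, in_xi_image σ (@instance L M k m φ b) s) /\
  (* (1) <-> (6) *)
  (has_IP T k m φ <->
     exists M : structure L, is_model T M /\ dense (@rho L M k m φ)).
Proof.
  intros [Hsent _] Hin.
  pose proof (ip_xi_full T k m φ Hin Hsent) as H15.
  pose proof (rho_dense_ip T k m φ Hin) as H61.
  pose proof (xi_full_dense T k m φ) as H52.
  pose proof (xi_full_universal T k m φ) as H54.
  pose proof (xi_universal_all_blocks T k m φ) as H43.
  pose proof (xi_dense_rho_dense T k m φ) as H26.
  pose proof (xi_all_blocks_rho_dense T k m φ) as H36.
  repeat split; intros H.
  - exact (H52 (H15 H)).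
  - exact (H61 (H26 H)).
  - exact (H43 (H54 (H15 H))).
  - exact (H61 (H36 H)).
  - exact (H54 (H15 H)).
  - exact (H61 (H36 (H43 H))).
  - exact (H15 H).
  - exact (H61 (H26 (H52 H))).
  - exact (H26 (H52 (H15 H))).
  - exact (H61 H).
Qed.
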